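(* Let $q>1$ and let $k$ be a positive integer. For $z,s\in\mathbb{C}$ with $|z|<1$ and $\Re(s)<1$ (the variable of integration $a$ ranging over $a\in\mathbb C\setminus\mathbb Z_0^-$), $$\int_0^1 \Phi_k(z,s,a)\,d_qa=\frac{1}{[1-s]_q}+\sum_{r=0}^{k-1}\binom kr \sum_{l=0}^\infty\binom{-s}{l}\frac{\mathrm{Li}_{k-r}(z,s+l)}{[l+1]_q}.$$ Moreover, for $a\in\mathbb C\setminus\mathbb Z_0^-$ and with $s\in\mathbb C$ arbitrary when $|z|<1$, or $\Re(s)>k$ when $|z|=1$, $$\int_0^1 \Phi_k(z,s,k-a)\,d_qa= z^{-k}\sum_{l=0}^\infty(-1)^l\binom{-s}{l}\frac{\mathrm{Li}_{k}(z,s+l)}{[l+1]_q},$$ $$\int_0^1 \Phi_k(z,s,k+a)\,d_qa= z^{-k}\sum_{l=0}^\infty\binom{-s}{l}\frac{\mathrm{Li}_{k}(z,s+l)}{[l+1]_q}.$$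
   Context: $\mathbb Z_0^-=\{0,-1,-2,\ldots\}$. For $q>1$, the Jackson integral is $\int_0^1 f(a)\,d_qa=(q-1)\sum_{n=1}^\infty f(q^{-n})q^{-n}$, and $[x]_q=\frac{q^{x}-1}{q-1}$. The multiple Hurwitz-Lerch zeta function is $\Phi_k(z,s,a)=\sum_{m_1,\ldots,m_k=0}^\infty\frac{z^{m_1+\dots+m_k}}{(m_1+\dots+m_k+a)^{s}}$ for $a\in\mathbb C\setminus\mathbb Z_0^-$, with $s\in\mathbb C$ when $|z|<1$ and $\Re(s)>k$ when $|z|=1$. The multiple Lipschitz-Lerch zeta function is $\mathrm{Li}_k(z,s)=\sum_{m_1,\ldots,m_k=1}^\infty\frac{z^{m_1+\dots+m_k}}{(m_1+\dots+m_k)^{s}}$, with $s\in\mathbb C$ when $|z|<1$ and $\Re(s)>k$ when $|z|=1$. $\binom{-s}{l}=\frac{(-s)(-s-1)\cdots(-s-l+1)}{l!}$. *)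

From Stdlib Require Import Reals Factorial.
From Coquelicot Require Import Coquelicot.
Open Scope R_scope.

Definition rpowC (x : R) (w : C) : C :=
  Cmult (RtoC (exp (Re w * ln x)))
        (cos (Im w * ln x), sin (Im w * ln x)).

(* Sum of a complex series, componentwise (Coquelicot's total [Series]);
   it is the usual sum whenever the series converges. *)
Definition CSeries (a : nat -> C) : C :=
  (Series (fun n => Re (a n)), Series (fun n => Im (a n))).

(* Jackson integral for q > 1:
   int_0^1 f(a) d_q a = (q-1) sum_{n>=1} f(q^{-n}) q^{-n}. *)
Definition jackson (q : R) (f : R -> C) : C :=
  Cmult (RtoC (q - 1))
        (CSeries (fun n => Cmult (f (/ q ^ (S n))) (RtoC (/ q ^ (S n))))).

Definition qnum (q : R) (x : C) : C :=
  Cdiv (Cminus (rpowC q x) (RtoC 1)) (RtoC (q - 1)).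

(* Iterated form of the k-fold sum
   sum_{m_1,...,m_k >= 0} z^(m_1+...+m_k) / (m_1+...+m_k + c)^s. *)
Fixpoint PhiAux (k : nat) (z s : C) (c : R) : C :=
  match k with
  | O => rpowC c (Copp s)
  | S k' => CSeries (fun m => Cmult (Cpow z m) (PhiAux k' z s (c + INR m)))
  end.

(* Multiple Hurwitz-Lerch zeta function Phi_k(z,s,a); here a is a positive
   real (the only values at which the Jackson integral evaluates it). *)
Definition Phi (k : nat) (z s : C) (a : R) : C := PhiAux k z s a.

(* Iterated form of sum_{m_1,...,m_k >= 1} z^(m_1+..+m_k)/(m_1+..+m_k + c)^s. *)
Fixpoint LiAux (k : nat) (z s : C) (c : R) : C :=
  match k with
  | O => rpowC c (Copp s)
  | S k' => CSeries (fun m => Cmult (Cpow z (S m)) (LiAux k' z s (c + INR (S m))))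
  end.

Definition Li (k : nat) (z s : C) : C := LiAux k z s 0.

Fixpoint fallC (w : C) (l : nat) : C :=
  match l with
  | O => RtoC 1
  | S l' => Cmult (fallC w l') (Cminus w (RtoC (INR l')))
  end.
Definition binomC (w : C) (l : nat) : C := Cdiv (fallC w l) (RtoC (INR (fact l))).

(* For |a| < c the binomial series gives (c + a)^(-s) = sum_l binom(-s, l) a^l c^(-s-l); applied to
   every term of the multiple sum it yields
     Phi_k(z, s, c + a) = sum_l binom(-s, l) a^l Phi_k(z, s + l, c),
   the interchange of summations being justified by the decay |Phi_k(z, s, c)| = O(c^(-Re s)) for
   |z| < 1, resp. O(c^(k - Re s)) for |z| = 1. Integrating termwise, with int_0^1 a^l d_qa =
   1/[l+1]_q, and using Phi_k(z, s + l, k) = z^(-k) Li_k(z, s + l) (lower every summation index by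
   one) gives the formulas for Phi_k(z, s, k +- a). For the first formula, sorting the indices
   (m_1, ..., m_k) by which of them vanish gives Phi_k(z, s, a) = sum_j C(k, j) Li_j(z, s; a), where
   Li_j(z, s; a) is the j-fold sum over m_i >= 1 of z^(m_1+...+m_j) (m_1+...+m_j+a)^(-s) and
   Li_j(z, s; a) = z^j Phi_j(z, s, a + j); the term j = 0 is a^(-s), whose Jackson integral is the
   geometric series 1/[1-s]_q, convergent as Re s < 1. *)

From Stdlib Require Import Reals Lra Lia Factorial.
From Coquelicot Require Import Coquelicot.
Open Scope R_scope.

(** * Series of nonnegative reals *)

Lemma ex_series_nonneg_le (a b : nat -> R) :
  (forall n, 0 <= a n <= b n) -> ex_series b -> ex_series a.
Proof.
  intros Hab Hb. apply (ex_series_le (V := R_CompleteNormedModule) a b); auto.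
  intros n. change (Rabs (a n) <= b n). rewrite Rabs_pos_eq; apply Hab.
Qed.

Lemma sum_n_nonneg (b : nat -> R) N : (forall n, 0 <= b n) -> 0 <= sum_n b N.
Proof.
  intros Hb. induction N.
  - rewrite sum_O. apply Hb.
  - rewrite sum_Sn. specialize (Hb (S N)). change (0 <= sum_n b N + b (S N)). lra.
Qed.

Lemma is_lim_seq_partial_sums (a : nat -> R) l : is_series a l -> is_lim_seq (sum_n a) l.
Proof. intros H; exact H. Qed.

Lemma sum_n_le_Series (b : nat -> R) N :
  (forall n, 0 <= b n) -> ex_series b -> sum_n b N <= Series b.
Proof.
  intros Hb Hex. apply (is_lim_seq_incr_compare (sum_n b)).
  { exact (is_lim_seq_partial_sums _ _ (Series_correct _ Hex)). }
  intros n. rewrite sum_Sn. specialize (Hb (S n)). change (sum_n b n <= sum_n b n + b (S n)). lra.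
Qed.

Lemma term_le_Series (b : nat -> R) N :
  (forall n, 0 <= b n) -> ex_series b -> b N <= Series b.
Proof.
  intros Hb Hex. eapply Rle_trans; [|exact (sum_n_le_Series b N Hb Hex)].
  destruct N as [|N]; [rewrite sum_O; lra|].
  rewrite sum_Sn. change (b (S N) <= sum_n b N + b (S N)).
  pose proof (sum_n_nonneg b N Hb). lra.
Qed.

Lemma Series_le_bound (a : nat -> R) M :
  (forall N, sum_n a N <= M) -> ex_series a -> Series a <= M.
Proof.
  intros HM Hex.
  exact (is_lim_seq_le _ _ _ _ HM (is_lim_seq_partial_sums _ _ (Series_correct _ Hex))
                       (is_lim_seq_const M)).
Qed.

Lemma ex_series_nonneg_bounded (b : nat -> R) M :
  (forall n, 0 <= b n) -> (forall N, sum_n b N <= M) -> ex_series b.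
Proof.
  intros Hb HM. destruct (ex_finite_lim_seq_incr (sum_n b) M) as [l Hl]; [|exact HM|now exists l].
  intros n. rewrite sum_Sn. specialize (Hb (S n)). change (sum_n b n <= sum_n b n + b (S n)). lra.
Qed.

Lemma is_series_sum_n (b : nat -> nat -> R) (B : nat -> R) J :
  (forall j, is_series (fun i => b i j) (B j)) ->
  is_series (fun i => sum_n (b i) J) (sum_n B J).
Proof.
  intros H. induction J.
  - rewrite sum_O. eapply is_series_ext; [|apply H]. intros; now rewrite sum_O.
  - rewrite sum_Sn. eapply is_series_ext; [|exact (is_series_plus _ _ _ _ IHJ (H (S J)))].
    intros; now rewrite sum_Sn.
Qed.

Section NonnegDoubleSeries.

Variable b : nat -> nat -> R.
Hypothesis b_nonneg : forall i j, 0 <= b i j.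
Hypothesis ex_series_rows : forall i, ex_series (b i).
Hypothesis ex_series_row_sums : ex_series (fun i => Series (b i)).

Lemma ex_series_columns j : ex_series (fun i => b i j).
Proof.
  apply (ex_series_nonneg_le _ (fun i => Series (b i))); auto.
  intros i. split; [apply b_nonneg|apply term_le_Series; auto].
Qed.

Lemma column_partial_sums_le J :
  sum_n (fun j => Series (fun i => b i j)) J <= Series (fun i => Series (b i)).
Proof.
  rewrite <- (is_series_unique _ _
                (is_series_sum_n b _ J (fun j => Series_correct _ (ex_series_columns j)))).
  apply Series_le; auto. intros i. split.
  - apply sum_n_nonneg; auto.
  - apply sum_n_le_Series; auto.
Qed.

Lemma ex_series_column_sums : ex_series (fun j => Series (fun i => b i j)).
Proof.
  apply (ex_series_nonneg_bounded _ (Series (fun i => Series (b i)))).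
  - intros j. eapply Rle_trans; [apply (b_nonneg 0 j)|].
    apply (term_le_Series (fun i => b i j)); [intros; apply b_nonneg|apply ex_series_columns].
  - exact column_partial_sums_le.
Qed.

Lemma Series_columns_le_rows :
  Series (fun j => Series (fun i => b i j)) <= Series (fun i => Series (b i)).
Proof. exact (Series_le_bound _ _ column_partial_sums_le ex_series_column_sums). Qed.

End NonnegDoubleSeries.

Lemma is_series_Series_double (b : nat -> nat -> R) :
  (forall i j, 0 <= b i j) -> (forall i, ex_series (b i)) -> ex_series (fun i => Series (b i)) ->
  is_series (fun j => Series (fun i => b i j)) (Series (fun i => Series (b i))).
Proof.
  intros Hb Hrows Hsums.
  assert (Hcols := ex_series_columns b Hb Hrows Hsums).
  assert (Hcsums := ex_series_column_sums b Hb Hrows Hsums).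
  replace (Series (fun i => Series (b i))) with (Series (fun j => Series (fun i => b i j)));
    [now apply Series_correct|].
  apply Rle_antisym; [exact (Series_columns_le_rows b Hb Hrows Hsums)|].
  exact (Series_columns_le_rows (fun j i => b i j) (fun j i => Hb i j) Hcols Hcsums).
Qed.

(** * Complex series *)

Definition is_Cseries (a : nat -> C) (l : C) : Prop :=
  @is_series C_AbsRing C_NormedModule a l.

Lemma C_ext (u v : C) : Re u = Re v -> Im u = Im v -> u = v.
Proof. destruct u, v; simpl; intros; subst; auto. Qed.

Lemma Csum_Sn (a : nat -> C) n : sum_n a (S n) = Cplus (sum_n a n) (a (S n)).
Proof. exact (sum_Sn a n). Qed.

(* [ring] for equations of [sum_n] values over [C], which are stated at the type of the
   underlying monoid. *)
Ltac ring_C := match goal with |- ?x = ?y => change (@eq C x y) end; ring.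

Lemma Csum_plus (u v : nat -> C) n :
  sum_n (fun k => Cplus (u k) (v k)) n = Cplus (sum_n u n) (sum_n v n).
Proof. exact (sum_n_plus u v n). Qed.

Lemma Csum_mult_l w (f : nat -> C) n : Cmult w (sum_n f n) = sum_n (fun j => Cmult w (f j)) n.
Proof. exact (eq_sym (sum_n_mult_l (K := C_Ring) w f n)). Qed.

Lemma Csum_shift (g : nat -> C) n : sum_n g (S n) = Cplus (g O) (sum_n (fun j => g (S j)) n).
Proof.
  unfold sum_n. rewrite sum_Sn_m by lia. now rewrite <- sum_n_m_S.
Qed.

Lemma Csum_rev (g : nat -> C) n : sum_n g n = sum_n (fun r => g (n - r)%nat) n.
Proof.
  induction n as [|n IH]; [now rewrite !sum_O|].
  rewrite (Csum_Sn g), (Csum_shift (fun r => g (S n - r)%nat)), IH, Nat.sub_0_r.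
  apply Cplus_comm.
Qed.

Lemma Re_sum_n (a : nat -> C) n : Re (sum_n a n) = sum_n (fun k => Re (a k)) n.
Proof.
  induction n; [now rewrite !sum_O|].
  rewrite Csum_Sn, sum_Sn, <- IHn. reflexivity.
Qed.

Lemma Im_sum_n (a : nat -> C) n : Im (sum_n a n) = sum_n (fun k => Im (a k)) n.
Proof.
  induction n; [now rewrite !sum_O|].
  rewrite Csum_Sn, sum_Sn, <- IHn. reflexivity.
Qed.

Lemma is_Cseries_Re a l : is_Cseries a l -> is_series (fun n => Re (a n)) (Re l).
Proof.
  intros H. apply filterlim_locally. intros eps.
  eapply filter_imp; [|exact (proj1 (filterlim_locally _ _) H eps)]. intros n [Hn _].
  change (ball (Re l) eps (Re (sum_n a n))) in Hn. now rewrite Re_sum_n in Hn.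
Qed.

Lemma is_Cseries_Im a l : is_Cseries a l -> is_series (fun n => Im (a n)) (Im l).
Proof.
  intros H. apply filterlim_locally. intros eps.
  eapply filter_imp; [|exact (proj1 (filterlim_locally _ _) H eps)]. intros n [_ Hn].
  change (ball (Im l) eps (Im (sum_n a n))) in Hn. now rewrite Im_sum_n in Hn.
Qed.

Lemma is_Cseries_Re_Im a lr li :
  is_series (fun n => Re (a n)) lr -> is_series (fun n => Im (a n)) li -> is_Cseries a (lr, li).
Proof.
  intros Hr Hi. apply filterlim_locally. intros eps.
  generalize (filter_and _ _ (proj1 (filterlim_locally _ _) Hr eps)
                             (proj1 (filterlim_locally _ _) Hi eps)).
  apply filter_imp. intros n [H1 H2]. split.
  - change (ball lr eps (Re (sum_n a n))). now rewrite Re_sum_n.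
  - change (ball li eps (Im (sum_n a n))). now rewrite Im_sum_n.
Qed.

Lemma is_series_zero : is_series (fun _ : nat => 0) 0.
Proof.
  apply (filterlim_ext (fun _ => 0)); [|apply filterlim_const].
  intros n. symmetry. exact (@sum_n_m_const_zero R_AbelianMonoid 0 n).
Qed.

Lemma is_Cseries_RtoC (u : nat -> R) l : is_series u l -> is_Cseries (fun n => RtoC (u n)) (RtoC l).
Proof. intros H. apply is_Cseries_Re_Im; [exact H|exact is_series_zero]. Qed.

Lemma is_Cseries_unique a l : is_Cseries a l -> CSeries a = l.
Proof.
  intros H. unfold CSeries.
  rewrite (is_series_unique _ _ (is_Cseries_Re _ _ H)), (is_series_unique _ _ (is_Cseries_Im _ _ H)).
  now destruct l.
Qed.

Lemma is_Cseries_ext a b l : (forall n, a n = b n) -> is_Cseries a l -> is_Cseries b l.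
Proof. exact (is_series_ext a b l). Qed.

Lemma is_Cseries_plus a b la lb :
  is_Cseries a la -> is_Cseries b lb -> is_Cseries (fun n => Cplus (a n) (b n)) (Cplus la lb).
Proof. exact (is_series_plus a b la lb). Qed.

Lemma is_Cseries_minus a b la lb :
  is_Cseries a la -> is_Cseries b lb -> is_Cseries (fun n => Cminus (a n) (b n)) (Cminus la lb).
Proof. exact (is_series_minus a b la lb). Qed.

Lemma is_Cseries_scal c a l : is_Cseries a l -> is_Cseries (fun n => Cmult c (a n)) (Cmult c l).
Proof. exact (is_series_scal c a l). Qed.

Lemma is_Cseries_sum_n (a : nat -> nat -> C) (B : nat -> C) J :
  (forall j, (j <= J)%nat -> is_Cseries (fun i => a i j) (B j)) ->
  is_Cseries (fun i => sum_n (a i) J) (sum_n B J).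
Proof.
  induction J as [|J IH]; intros H.
  - rewrite sum_O. eapply is_Cseries_ext; [|apply H; lia]. intros; now rewrite sum_O.
  - rewrite Csum_Sn.
    eapply is_Cseries_ext; [|exact (is_Cseries_plus _ _ _ _ (IH ltac:(auto)) (H (S J) (le_n _)))].
    intros; now rewrite Csum_Sn.
Qed.

Lemma CSeries_ext a b : (forall n, a n = b n) -> CSeries a = CSeries b.
Proof. intros H. unfold CSeries. f_equal; apply Series_ext; intros n; now rewrite H. Qed.

Lemma ex_series_Cmod_is_Cseries a : ex_series (fun n => Cmod (a n)) -> is_Cseries a (CSeries a).
Proof.
  intros H.
  destruct (ex_series_le (V := C_CompleteNormedModule) a (fun n => Cmod (a n)) (fun n => Rle_refl _) H)
    as [l Hl].
  rewrite (is_Cseries_unique _ _ Hl). exact Hl.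
Qed.

Lemma is_Cseries_Cmod_le a l b L :
  is_Cseries a l -> (forall n, Cmod (a n) <= b n) -> is_series b L -> Cmod l <= L.
Proof.
  intros Ha Hb HL.
  assert (Hlim : is_lim_seq (fun n => Cmod (sum_n a n)) (Cmod l)).
  { eapply filterlim_comp; [exact Ha|exact (@filterlim_norm C_AbsRing C_NormedModule l)]. }
  refine (is_lim_seq_le _ _ _ _ _ Hlim (is_lim_seq_partial_sums _ _ HL)). intros n.
  eapply Rle_trans; [exact (@norm_sum_n_m C_AbsRing C_NormedModule a 0 n)|].
  apply (sum_n_m_le (fun k => Cmod (a k)) b). intros; apply Hb.
Qed.

Lemma is_Cseries_geom_S rho : Cmod rho < 1 ->
  is_Cseries (fun n => Cpow rho (S n)) (Cdiv rho (Cminus (RtoC 1) rho)).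
Proof.
  intros Hr.
  assert (Hr' : Rabs (Cmod rho) < 1) by (rewrite Rabs_pos_eq by apply Cmod_ge_0; exact Hr).
  assert (Habs : ex_series (fun n => Cmod (Cpow rho (S n)))).
  { exists (Cmod rho * / (1 - Cmod rho)).
    eapply is_series_ext; [|exact (is_series_scal_l (V := R_NormedModule) _ _ _ (is_series_geom _ Hr'))].
    intros n. now rewrite Cmod_pow. }
  pose proof (ex_series_Cmod_is_Cseries _ Habs) as HG.
  set (G := CSeries (fun n => Cpow rho (S n))) in *.
  (* Peeling off the first term gives [G = rho G + rho]. *)
  assert (Hfix : is_Cseries (fun n => Cpow rho (S n)) (Cplus (Cmult rho G) rho)).
  { apply (is_series_decr_1 (K := C_AbsRing) (V := C_NormedModule)).
    match goal with |- is_series _ ?v => replace v with (Cmult rho G) end.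
    - exact (is_Cseries_scal rho _ _ HG).
    - change (Cmult rho G = Cplus (Cplus (Cmult rho G) rho) (Copp (Cmult rho (RtoC 1)))). ring. }
  assert (Hne : Cminus (RtoC 1) rho <> RtoC 0).
  { intros E. assert (Hrho : rho = RtoC 1).
    { replace rho with (Cminus (RtoC 1) (Cminus (RtoC 1) rho)) by ring. rewrite E. apply C_ext; simpl; ring. }
    rewrite Hrho, Cmod_1 in Hr. lra. }
  assert (HGrho : Cmult G (Cminus (RtoC 1) rho) = rho).
  { transitivity (Cminus G (Cmult rho G)); [ring|].
    pose proof (is_Cseries_unique _ _ Hfix) as E. fold G in E. rewrite E at 1. ring. }
  replace (Cdiv rho (Cminus (RtoC 1) rho)) with G; [exact HG|].
  rewrite <- HGrho at 1. field. exact Hne.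
Qed.

Lemma Cmod_Cseries_tail_le a l b J :
  is_Cseries a l -> (forall n, Cmod (a n) <= b n) -> ex_series b ->
  Cmod (Cminus l (sum_n a J)) <= Series b - sum_n b J.
Proof.
  intros Ha Hab Hb.
  apply (is_Cseries_Cmod_le (fun k => a (S J + k)%nat) _ (fun k => b (S J + k)%nat)).
  - apply (is_series_incr_n (V := C_NormedModule) a (S J)); [lia|]. simpl pred.
    match goal with |- is_series _ ?v => replace v with l; [exact Ha|] end.
    change (l = Cplus (Cminus l (sum_n a J)) (sum_n a J)). ring.
  - intros; apply Hab.
  - apply (is_series_incr_n (V := R_NormedModule) b (S J)); [lia|]. simpl pred.
    match goal with |- is_series _ ?v => replace v with (Series b); [now apply Series_correct|] end.
    change (Series b = Series b - sum_n b J + sum_n b J). ring.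
Qed.

Section AbsConvergentDoubleSeries.

Variable a : nat -> nat -> C.
Variable b : nat -> nat -> R.
Hypothesis Cmod_a_le : forall i j, Cmod (a i j) <= b i j.
Hypothesis ex_series_rows : forall i, ex_series (b i).
Hypothesis ex_series_row_sums : ex_series (fun i => Series (b i)).

Let b_nonneg i j : 0 <= b i j.
Proof. eapply Rle_trans; [apply Cmod_ge_0|apply Cmod_a_le]. Qed.

Let is_Cseries_row i : is_Cseries (a i) (CSeries (a i)).
Proof.
  apply ex_series_Cmod_is_Cseries, (ex_series_nonneg_le _ (b i)); auto.
  intros j; split; [apply Cmod_ge_0|apply Cmod_a_le].
Qed.

Let is_Cseries_column j : is_Cseries (fun i => a i j) (CSeries (fun i => a i j)).
Proof.
  apply ex_series_Cmod_is_Cseries,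
    (ex_series_nonneg_le _ _ (fun i => conj (Cmod_ge_0 _) (Cmod_a_le i j))).
  exact (ex_series_columns b b_nonneg ex_series_rows ex_series_row_sums j).
Qed.

Lemma is_Cseries_row_sums : is_Cseries (fun i => CSeries (a i)) (CSeries (fun i => CSeries (a i))).
Proof.
  apply ex_series_Cmod_is_Cseries, (ex_series_nonneg_le _ (fun i => Series (b i))); auto.
  intros i. split; [apply Cmod_ge_0|].
  exact (is_Cseries_Cmod_le _ _ _ _ (is_Cseries_row i) (Cmod_a_le i) (Series_correct _ (ex_series_rows i))).
Qed.

Lemma is_Cseries_column_sums :
  is_Cseries (fun j => CSeries (fun i => a i j)) (CSeries (fun i => CSeries (a i))).
Proof.
  set (A := CSeries (fun i => CSeries (a i))).
  set (B := fun j => CSeries (fun i => a i j)).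
  set (Btot := Series (fun i => Series (b i))).
  (* The j-th partial sum of the column sums differs from [A] by the sum over i of the
     row tails, which the tails of the row bounds control uniformly. *)
  assert (Hrest : forall J, Cmod (Cminus A (sum_n B J)) <= Btot - sum_n (fun j => Series (fun i => b i j)) J).
  { intros J.
    apply (is_Cseries_Cmod_le (fun i => Cminus (CSeries (a i)) (sum_n (a i) J)) _
             (fun i => Series (b i) - sum_n (b i) J)).
    - apply is_Cseries_minus; [exact is_Cseries_row_sums|].
      apply is_Cseries_sum_n. intros j _. apply is_Cseries_column.
    - intros i. apply Cmod_Cseries_tail_le; auto.
    - apply (is_series_minus (V := R_NormedModule)); [now apply Series_correct|].
      apply is_series_sum_n. intros j. apply Series_correct.
      exact (ex_series_columns b b_nonneg ex_series_rows ex_series_row_sums j). }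
  pose proof (is_series_Series_double b b_nonneg ex_series_rows ex_series_row_sums) as Hcols.
  apply filterlim_locally. intros eps.
  eapply filter_imp; [|exact (proj1 (filterlim_locally _ _) Hcols eps)]. intros J HJ.
  apply (norm_compat1 (K := C_AbsRing) (V := C_NormedModule)).
  change (Cmod (Cminus (sum_n B J) A) < eps).
  rewrite <- Cmod_opp.
  replace (Copp (Cminus (sum_n B J) A)) with (Cminus A (sum_n B J)) by ring.
  eapply Rle_lt_trans; [apply Hrest|].
  change (Rabs (sum_n (fun j => Series (fun i => b i j)) J - Btot) < eps) in HJ.
  apply Rabs_def2 in HJ. lra.
Qed.

End AbsConvergentDoubleSeries.

Lemma is_Cseries_double_product (a : nat -> nat -> C) (u v : nat -> R) :
  (forall i j, Cmod (a i j) <= u i * v j) -> ex_series u -> ex_series v ->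
  is_Cseries (fun i => CSeries (a i)) (CSeries (fun i => CSeries (a i))) /\
  is_Cseries (fun j => CSeries (fun i => a i j)) (CSeries (fun i => CSeries (a i))).
Proof.
  intros Hle Hu Hv.
  assert (Hrows : forall i, ex_series (fun j => u i * v j))
    by (intros i; exact (ex_series_scal_l (V := R_NormedModule) (u i) v Hv)).
  assert (Hsums : ex_series (fun i => Series (fun j => u i * v j))).
  { apply (ex_series_ext (fun i => u i * Series v)); [intros i; now rewrite Series_scal_l|].
    now apply ex_series_scal_r. }
  split.
  - exact (is_Cseries_row_sums a (fun i j => u i * v j) Hle Hrows Hsums).
  - exact (is_Cseries_column_sums a (fun i j => u i * v j) Hle Hrows Hsums).
Qed.

(** * Complex powers of positive reals *)

Lemma RtoC_neq0 x : x <> 0 -> RtoC x <> RtoC 0.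
Proof. intros H E. apply H. exact (f_equal fst E). Qed.

Lemma rpowC_plus x w v : rpowC x (Cplus w v) = Cmult (rpowC x w) (rpowC x v).
Proof.
  destruct w as [a b], v as [c d]. unfold rpowC; apply C_ext; simpl;
  rewrite !Rmult_plus_distr_r, exp_plus; [rewrite cos_plus|rewrite sin_plus]; ring.
Qed.

Lemma rpowC_RtoC x r : rpowC x (RtoC r) = RtoC (exp (r * ln x)).
Proof.
  unfold rpowC. simpl. rewrite Rmult_0_l, cos_0, sin_0.
  apply C_ext; simpl; ring.
Qed.

Lemma rpowC_0 x : rpowC x (RtoC 0) = RtoC 1.
Proof. now rewrite rpowC_RtoC, Rmult_0_l, exp_0. Qed.

Lemma rpowC_1 w : rpowC 1 w = RtoC 1.
Proof. unfold rpowC. rewrite ln_1, !Rmult_0_r, exp_0, cos_0, sin_0. apply C_ext; simpl; ring. Qed.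

Lemma rpowC_1_r x : 0 < x -> rpowC x (RtoC 1) = RtoC x.
Proof. intros Hx. now rewrite rpowC_RtoC, Rmult_1_l, exp_ln. Qed.

Lemma rpowC_mult x y w : 0 < x -> 0 < y -> rpowC (x * y) w = Cmult (rpowC x w) (rpowC y w).
Proof.
  intros Hx Hy. unfold rpowC. rewrite ln_mult by auto. destruct w as [a b].
  apply C_ext; simpl;
  rewrite !Rmult_plus_distr_l, exp_plus; [rewrite cos_plus|rewrite sin_plus]; ring.
Qed.

Lemma rpowC_pow x w n : 0 < x -> rpowC (x ^ n) w = Cpow (rpowC x w) n.
Proof.
  intros Hx. induction n; [apply rpowC_1|].
  simpl pow. rewrite rpowC_mult, IHn by (auto; apply pow_lt; auto). reflexivity.
Qed.

Lemma Cmod_rpowC x w : Cmod (rpowC x w) = exp (Re w * ln x).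
Proof.
  unfold rpowC. rewrite Cmod_mult, Cmod_R, Rabs_pos_eq by (left; apply exp_pos).
  unfold Cmod. simpl. rewrite !Rmult_1_r.
  match goal with |- context [cos ?t] => pose proof (sin2_cos2 t) as E end.
  unfold Rsqr in E. rewrite Rplus_comm, E, sqrt_1. ring.
Qed.

Lemma exp_INR_ln x n : 0 < x -> exp (INR n * ln x) = x ^ n.
Proof. intros Hx. now rewrite <- Rpower_pow by auto. Qed.

Lemma exp_opp_INR_ln x n : 0 < x -> exp (- INR n * ln x) = / x ^ n.
Proof. intros Hx. now rewrite Ropp_mult_distr_l_reverse, exp_Ropp, exp_INR_ln. Qed.

Lemma rpowC_opp_plus_INR c s l : 0 < c ->
  rpowC c (Copp (Cplus s (RtoC (INR l)))) = Cmult (rpowC c (Copp s)) (RtoC (/ c ^ l)).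
Proof.
  intros Hc. replace (Copp (Cplus s (RtoC (INR l)))) with (Cplus (Copp s) (RtoC (- INR l)))
    by (apply C_ext; simpl; ring).
  now rewrite rpowC_plus, rpowC_RtoC, exp_opp_INR_ln.
Qed.

(** * The binomial series *)

Lemma binomC_0 w : binomC w 0 = RtoC 1.
Proof. unfold binomC. simpl. apply C_ext; simpl; field. Qed.

Lemma binomC_S w l :
  binomC w (S l) = Cmult (binomC w l) (Cmult (Cminus w (RtoC (INR l))) (RtoC (/ INR (S l)))).
Proof.
  unfold binomC. simpl fallC. rewrite fact_simpl, mult_INR.
  assert (H1 : INR (fact l) <> 0) by apply INR_fact_neq_0.
  assert (H2 : INR (S l) <> 0) by (apply not_0_INR; lia).
  rewrite (RtoC_inv (INR (S l))), RtoC_mult by auto.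
  field. split; apply RtoC_neq0; auto.
Qed.

Lemma binomC_S_mult w l :
  Cmult (binomC w (S l)) (RtoC (INR (S l))) = Cmult (binomC w l) (Cminus w (RtoC (INR l))).
Proof.
  assert (H : INR (S l) <> 0) by (apply not_0_INR; lia).
  rewrite binomC_S, <- !Cmult_assoc, <- RtoC_mult, Rinv_l by auto.
  apply C_ext; simpl; ring.
Qed.

(* [binom_majorant mu l] is the binomial coefficient of [mu + l - 1] over [l]: a nonvanishing
   majorant of [binomC w l] for [mu = |w| + 1], to which the ratio test applies. *)
Fixpoint binom_majorant (mu : R) (l : nat) : R :=
  match l with O => 1 | S l' => binom_majorant mu l' * ((mu + INR l') / INR (S l')) end.

Lemma binom_majorant_pos mu l : 0 < mu -> 0 < binom_majorant mu l.
Proof.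
  intros Hmu. induction l as [|l IHl]; [simpl; lra|].
  change (0 < binom_majorant mu l * ((mu + INR l) / INR (S l))).
  apply Rmult_lt_0_compat; auto. apply Rdiv_lt_0_compat.
  - pose proof (pos_INR l); lra.
  - apply lt_0_INR; lia.
Qed.

Lemma Cmod_binomC_le w l : Cmod (binomC w l) <= binom_majorant (Cmod w + 1) l.
Proof.
  induction l.
  - rewrite binomC_0, Cmod_1. simpl; lra.
  - rewrite binomC_S, !Cmod_mult.
    change (binom_majorant _ (S l)) with
      (binom_majorant (Cmod w + 1) l * ((Cmod w + 1 + INR l) / INR (S l))).
    assert (H : 0 < INR (S l)) by (apply lt_0_INR; lia).
    rewrite Cmod_R, (Rabs_pos_eq (/ _)) by (left; apply Rinv_0_lt_compat; auto).
    unfold Rdiv. rewrite <- !Rmult_assoc.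
    apply Rmult_le_compat_r; [left; apply Rinv_0_lt_compat; auto|].
    apply Rmult_le_compat; auto; try apply Cmod_ge_0.
    unfold Cminus. eapply Rle_trans; [apply Cmod_triangle|].
    rewrite Cmod_opp, Cmod_R, Rabs_pos_eq by apply pos_INR. lra.
Qed.

Lemma is_lim_seq_inv_INR_S : is_lim_seq (fun n => / INR (S n)) 0.
Proof.
  apply (is_lim_seq_inv _ p_infty); [|discriminate].
  apply (is_lim_seq_incr_1 INR p_infty), is_lim_seq_INR.
Qed.

Lemma ex_series_binom_majorant_pos mu r : 0 < mu -> 0 < r < 1 ->
  ex_series (fun l => binom_majorant mu l * r ^ l).
Proof.
  intros Hmu Hr. apply ex_series_Rabs, (ex_series_DAlembert _ r); [lra| |].
  - intros n. apply Rgt_not_eq, Rmult_lt_0_compat; [apply binom_majorant_pos; auto|apply pow_lt; lra].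
  - apply (is_lim_seq_ext (fun n => r * (1 + (mu - 1) * / INR (S n)))).
    + intros n. change (binom_majorant mu (S n)) with (binom_majorant mu n * ((mu + INR n) / INR (S n))).
      assert (H1 : 0 < binom_majorant mu n) by (apply binom_majorant_pos; auto).
      assert (H2 : 0 < INR (S n)) by (apply lt_0_INR; lia).
      assert (H3 : 0 < r ^ n) by (apply pow_lt; lra).
      assert (H4 : 0 < mu + INR n) by (pose proof (pos_INR n); lra).
      rewrite Rabs_pos_eq.
      * rewrite S_INR in *. simpl pow. field. repeat split; lra.
      * assert (0 < (mu + INR n) / INR (S n)) by (apply Rdiv_lt_0_compat; auto).
        apply Rlt_le, Rdiv_lt_0_compat; apply Rmult_lt_0_compat; auto.
        -- apply Rmult_lt_0_compat; auto.
        -- change (0 < r * r ^ n). apply Rmult_lt_0_compat; lra.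
    + assert (L : is_lim_seq (fun n => r * (1 + (mu - 1) * / INR (S n))) (r * (1 + (mu - 1) * 0))).
      { apply is_lim_seq_mult', is_lim_seq_plus', is_lim_seq_mult', is_lim_seq_inv_INR_S;
          apply is_lim_seq_const. }
      now rewrite Rmult_0_r, Rplus_0_r, Rmult_1_r in L.
Qed.

Lemma ex_series_binom_majorant mu r : 0 < mu -> 0 <= r < 1 ->
  ex_series (fun l => binom_majorant mu l * r ^ l).
Proof.
  intros Hmu Hr. apply (ex_series_nonneg_le _ (fun l => binom_majorant mu l * ((1 + r) / 2) ^ l)).
  - intros n. pose proof (binom_majorant_pos mu n Hmu). split.
    + apply Rmult_le_pos; [lra|apply pow_le; lra].
    + apply Rmult_le_compat_l; [lra|apply pow_incr; lra].
  - apply ex_series_binom_majorant_pos; lra.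
Qed.

Lemma ex_series_Cmod_binomC w r : 0 <= r < 1 -> ex_series (fun l => Cmod (binomC w l) * r ^ l).
Proof.
  intros Hr. apply (ex_series_nonneg_le _ (fun l => binom_majorant (Cmod w + 1) l * r ^ l)).
  - intros n. split.
    + apply Rmult_le_pos; [apply Cmod_ge_0|apply pow_le; lra].
    + apply Rmult_le_compat_r; [apply pow_le; lra|apply Cmod_binomC_le].
  - apply ex_series_binom_majorant; [pose proof (Cmod_ge_0 w); lra|auto].
Qed.

Lemma CV_radius_gt_of_majorant (a : nat -> R) mu t :
  0 < mu -> (forall n, Rabs (a n) <= binom_majorant mu n) -> Rabs t < 1 ->
  Rbar_lt (Rabs t) (CV_radius a).
Proof.
  intros Hmu Ha Ht.
  set (r := (1 + Rabs t) / 2).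
  assert (Hr : 0 <= r < 1) by (unfold r; pose proof (Rabs_pos t); lra).
  assert (Hle : Rbar_le r (CV_radius a)).
  { apply (proj1 (CV_radius_bounded a)).
    exists (Series (fun l => binom_majorant mu l * r ^ l)). intros n.
    rewrite Rabs_mult, <- RPow_abs, (Rabs_pos_eq r) by lra.
    eapply Rle_trans; [|apply (term_le_Series (fun l => binom_majorant mu l * r ^ l) n)].
    - apply Rmult_le_compat_r; [apply pow_le; lra|apply Ha].
    - intros l. apply Rmult_le_pos; [left; apply binom_majorant_pos; auto|apply pow_le; lra].
    - apply ex_series_binom_majorant; auto. }
  destruct (CV_radius a) as [x| |]; simpl in *; auto.
  unfold r in Hle; lra.
Qed.

(* A coefficient recurrence [(l+1) a_(l+1) + l a_l = c_l] says [(1 + t) f'(t) = sum c_l t^l]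
   for [f = sum a_l t^l]. *)
Lemma is_series_one_plus_mult_derive (a c : nat -> R) t :
  Rbar_lt (Rabs t) (CV_radius a) ->
  (forall l, INR (S l) * a (S l) + INR l * a l = c l) ->
  is_series (fun l => c l * t ^ l) ((1 + t) * PSeries (PS_derive a) t).
Proof.
  intros Hr Hc.
  set (D := PSeries (PS_derive a) t).
  assert (HD : is_series (fun l => PS_derive a l * t ^ l) D).
  { apply Series_correct, ex_series_Rabs, CV_disk_inside. now rewrite CV_radius_derive. }
  assert (HtD : is_series (fun l => INR l * a l * t ^ l) (t * D)).
  { apply is_series_decr_1.
    match goal with |- is_series _ ?v => replace v with (t * D) end.
    - eapply is_series_ext; [|exact (is_series_scal_l (V := R_NormedModule) t _ _ HD)].
      intros k. unfold PS_derive. simpl. change (t * (INR (S k) * a (S k) * t ^ k) =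
        INR (S k) * a (S k) * (t * t ^ k)). ring.
    - change (t * D = t * D + - (INR 0 * a 0%nat * 1)). simpl. ring. }
  replace ((1 + t) * D) with (D + t * D) by ring.
  eapply is_series_ext; [|exact (is_series_plus _ _ _ _ HD HtD)].
  intros l. change (PS_derive a l * t ^ l + INR l * a l * t ^ l = c l * t ^ l).
  unfold PS_derive. rewrite <- Hc. ring.
Qed.

Lemma derive_zero_const (G : R -> R) t :
  (forall x, Rabs x < 1 -> is_derive G x 0) -> Rabs t < 1 -> G t = G 0.
Proof.
  intros HG Ht.
  assert (Hin : forall x, Rmin 0 t <= x <= Rmax 0 t -> Rabs x < 1).
  { intros x Hx. apply Rabs_def1; unfold Rmin, Rmax in Hx; apply Rabs_def2 in Ht;
      destruct (Rle_dec 0 t); lra. }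
  destruct (MVT_gen G 0 t (fun _ => 0)) as [c [_ E]].
  - intros x Hx. apply HG, Hin. lra.
  - intros x Hx. apply continuity_pt_filterlim. apply (ex_derive_continuous G x).
    exists 0. now apply HG, Hin.
  - lra.
Qed.

Section BinomialSeries.

Variable w : C.

Let p := Re w.
Let q := Im w.
Let U := PSeries (fun l => Re (binomC w l)).
Let V := PSeries (fun l => Im (binomC w l)).

Let Rabs_Re_binomC_le n : Rabs (Re (binomC w n)) <= binom_majorant (Cmod w + 1) n.
Proof. eapply Rle_trans; [apply re_le_Cmod|apply Cmod_binomC_le]. Qed.

Let Rabs_Im_binomC_le n : Rabs (Im (binomC w n)) <= binom_majorant (Cmod w + 1) n.
Proof.
  eapply Rle_trans; [|apply Cmod_binomC_le].
  destruct (binomC w n) as [x y]. unfold Cmod. simpl.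
  rewrite <- sqrt_Rsqr_abs. apply sqrt_le_1_alt. unfold Rsqr. nra.
Qed.

Let radius_Re t : Rabs t < 1 -> Rbar_lt (Rabs t) (CV_radius (fun l => Re (binomC w l))).
Proof.
  intros Ht. apply (CV_radius_gt_of_majorant _ (Cmod w + 1)); [|exact Rabs_Re_binomC_le|exact Ht].
  pose proof (Cmod_ge_0 w); lra.
Qed.

Let radius_Im t : Rabs t < 1 -> Rbar_lt (Rabs t) (CV_radius (fun l => Im (binomC w l))).
Proof.
  intros Ht. apply (CV_radius_gt_of_majorant _ (Cmod w + 1)); [|exact Rabs_Im_binomC_le|exact Ht].
  pose proof (Cmod_ge_0 w); lra.
Qed.

Let is_series_U t : Rabs t < 1 -> is_series (fun l => Re (binomC w l) * t ^ l) (U t).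
Proof. intros Ht. apply Series_correct, ex_series_Rabs, CV_disk_inside, radius_Re, Ht. Qed.

Let is_series_V t : Rabs t < 1 -> is_series (fun l => Im (binomC w l) * t ^ l) (V t).
Proof. intros Ht. apply Series_correct, ex_series_Rabs, CV_disk_inside, radius_Im, Ht. Qed.

(* Real and imaginary parts of [(l+1) binom(w,l+1) + l binom(w,l) = w binom(w,l)]. *)
Let recurrence_Re l :
  INR (S l) * Re (binomC w (S l)) + INR l * Re (binomC w l) = p * Re (binomC w l) - q * Im (binomC w l).
Proof.
  pose proof (f_equal Re (binomC_S_mult w l)) as E. rewrite S_INR in *. unfold p, q.
  destruct (binomC w (S l)) as [x1 y1], (binomC w l) as [x2 y2], w as [a b]. simpl in *. nra.
Qed.

Let recurrence_Im l :
  INR (S l) * Im (binomC w (S l)) + INR l * Im (binomC w l) = q * Re (binomC w l) + p * Im (binomC w l).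
Proof.
  pose proof (f_equal Im (binomC_S_mult w l)) as E. rewrite S_INR in *. unfold p, q.
  destruct (binomC w (S l)) as [x1 y1], (binomC w l) as [x2 y2], w as [a b]. simpl in *. nra.
Qed.

Let is_derive_U t : Rabs t < 1 -> is_derive U t ((p * U t - q * V t) / (1 + t)).
Proof.
  intros Ht.
  assert (E : (1 + t) * PSeries (PS_derive (fun l => Re (binomC w l))) t = p * U t - q * V t).
  { rewrite <- (is_series_unique _ _ (is_series_one_plus_mult_derive _ _ t (radius_Re t Ht) recurrence_Re)).
    apply is_series_unique.
    eapply is_series_ext; [|exact (is_series_minus (V := R_NormedModule) _ _ _ _
        (is_series_scal_l (V := R_NormedModule) p _ _ (is_series_U t Ht))
        (is_series_scal_l (V := R_NormedModule) q _ _ (is_series_V t Ht)))].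
    intros n. change (p * (Re (binomC w n) * t ^ n) + - (q * (Im (binomC w n) * t ^ n)) =
      (p * Re (binomC w n) - q * Im (binomC w n)) * t ^ n). ring. }
  replace ((p * U t - q * V t) / (1 + t)) with (PSeries (PS_derive (fun l => Re (binomC w l))) t).
  - apply is_derive_PSeries, radius_Re, Ht.
  - rewrite <- E. apply Rabs_def2 in Ht. field. lra.
Qed.

Let is_derive_V t : Rabs t < 1 -> is_derive V t ((q * U t + p * V t) / (1 + t)).
Proof.
  intros Ht.
  assert (E : (1 + t) * PSeries (PS_derive (fun l => Im (binomC w l))) t = q * U t + p * V t).
  { rewrite <- (is_series_unique _ _ (is_series_one_plus_mult_derive _ _ t (radius_Im t Ht) recurrence_Im)).
    apply is_series_unique.
    eapply is_series_ext; [|exact (is_series_plus (V := R_NormedModule) _ _ _ _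
        (is_series_scal_l (V := R_NormedModule) q _ _ (is_series_U t Ht))
        (is_series_scal_l (V := R_NormedModule) p _ _ (is_series_V t Ht)))].
    intros n. change (q * (Re (binomC w n) * t ^ n) + p * (Im (binomC w n) * t ^ n) =
      (q * Re (binomC w n) + p * Im (binomC w n)) * t ^ n). ring. }
  replace ((q * U t + p * V t) / (1 + t)) with (PSeries (PS_derive (fun l => Im (binomC w l))) t).
  - apply is_derive_PSeries, radius_Im, Ht.
  - rewrite <- E. apply Rabs_def2 in Ht. field. lra.
Qed.

(* Real and imaginary parts of [(U + i V)(x) (1 + x)^(-w)], whose derivative vanishes. *)
Let G1 x := U x * (exp (- p * ln (1 + x)) * cos (- q * ln (1 + x)))
          - V x * (exp (- p * ln (1 + x)) * sin (- q * ln (1 + x))).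
Let G2 x := U x * (exp (- p * ln (1 + x)) * sin (- q * ln (1 + x)))
          + V x * (exp (- p * ln (1 + x)) * cos (- q * ln (1 + x))).

Let is_derive_G1 x : Rabs x < 1 -> is_derive G1 x 0.
Proof.
  intros Hx. assert (H1 : 0 < 1 + x) by (apply Rabs_def2 in Hx; lra).
  unfold G1. auto_derive.
  - repeat split; auto; eexists; [apply is_derive_U|apply is_derive_V]; auto.
  - change (Derive (fun y => U y) x) with (Derive U x).
    change (Derive (fun y => V y) x) with (Derive V x).
    rewrite (is_derive_unique _ _ _ (is_derive_U x Hx)), (is_derive_unique _ _ _ (is_derive_V x Hx)).
    field. lra.
Qed.

Let is_derive_G2 x : Rabs x < 1 -> is_derive G2 x 0.
Proof.
  intros Hx. assert (H1 : 0 < 1 + x) by (apply Rabs_def2 in Hx; lra).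
  unfold G2. auto_derive.
  - repeat split; auto; eexists; [apply is_derive_U|apply is_derive_V]; auto.
  - change (Derive (fun y => U y) x) with (Derive U x).
    change (Derive (fun y => V y) x) with (Derive V x).
    rewrite (is_derive_unique _ _ _ (is_derive_U x Hx)), (is_derive_unique _ _ _ (is_derive_V x Hx)).
    field. lra.
Qed.

Let UV_mult_rpowC_opp t : Rabs t < 1 -> Cmult (U t, V t) (rpowC (1 + t) (Copp w)) = RtoC 1.
Proof.
  intros Ht.
  assert (Hinit : U 0 = 1 /\ V 0 = 0).
  { unfold U, V. rewrite !PSeries_0, binomC_0. split; reflexivity. }
  apply C_ext.
  - transitivity (G1 t); [unfold G1, rpowC, p, q, Re, Im; simpl; ring|].
    rewrite (derive_zero_const G1 t is_derive_G1 Ht). unfold G1.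
    rewrite Rplus_0_r, ln_1, !Rmult_0_r, exp_0, cos_0, sin_0, (proj1 Hinit), (proj2 Hinit).
    simpl. ring.
  - transitivity (G2 t); [unfold G2, rpowC, p, q, Re, Im; simpl; ring|].
    rewrite (derive_zero_const G2 t is_derive_G2 Ht). unfold G2.
    rewrite Rplus_0_r, ln_1, !Rmult_0_r, exp_0, cos_0, sin_0, (proj1 Hinit), (proj2 Hinit).
    simpl. ring.
Qed.

Lemma is_Cseries_binomial t : Rabs t < 1 ->
  is_Cseries (fun l => Cmult (binomC w l) (RtoC (t ^ l))) (rpowC (1 + t) w).
Proof.
  intros Ht.
  assert (Hsum : is_Cseries (fun l => Cmult (binomC w l) (RtoC (t ^ l))) (U t, V t)).
  { apply is_Cseries_Re_Im.
    - eapply is_series_ext; [|exact (is_series_U t Ht)]. intros n. simpl. ring.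
    - eapply is_series_ext; [|exact (is_series_V t Ht)]. intros n. simpl. ring. }
  replace (rpowC (1 + t) w) with (U t, V t); [exact Hsum|].
  transitivity (Cmult (Cmult (U t, V t) (rpowC (1 + t) (Copp w))) (rpowC (1 + t) w)).
  - rewrite <- Cmult_assoc, <- rpowC_plus.
    replace (Cplus (Copp w) w) with (RtoC 0) by (apply C_ext; simpl; ring).
    rewrite rpowC_0, Cmult_1_r. reflexivity.
  - rewrite UV_mult_rpowC_opp, Cmult_1_l by auto. reflexivity.
Qed.

End BinomialSeries.

(** * Decay estimates for the multiple Hurwitz-Lerch sums *)

Lemma exp_le x y : x <= y -> exp x <= exp y.
Proof. intros [H|H]; [left; now apply exp_increasing|subst; lra]. Qed.

Lemma Rpower_pos x y : 0 < Rpower x y.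
Proof. apply exp_pos. Qed.

Lemma Cmod_rpowC_opp c s : Cmod (rpowC c (Copp s)) = Rpower c (- Re s).
Proof. apply Cmod_rpowC. Qed.

Lemma Rpower_opp_plus_INR c sg l : 0 < c -> Rpower c (- (sg + INR l)) = Rpower c (- sg) * / c ^ l.
Proof.
  intros Hc. now rewrite Ropp_plus_distr, Rpower_plus, (Rpower_Ropp c (INR l)), Rpower_pow.
Qed.

Lemma Rpower_opp_le_rate c sg sg' : 1 <= c -> sg <= sg' -> Rpower c (- sg') <= Rpower c (- sg).
Proof. intros Hc H. apply Rle_Rpower; lra. Qed.

Lemma Rpower_opp_le_base c c' sg : 0 < c <= c' -> 0 <= sg -> Rpower c' (- sg) <= Rpower c (- sg).
Proof.
  intros Hc Hsg. rewrite !Rpower_Ropp.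
  apply Rinv_le_contravar; [apply Rpower_pos|]. apply Rle_Rpower_l; lra.
Qed.

Lemma Rpower_opp_shift_le c sg N m : 1 <= c -> - INR N <= sg ->
  Rpower (c + INR m) (- sg) <= Rpower c (- sg) * (1 + INR m) ^ N.
Proof.
  intros Hc Hsg. pose proof (pos_INR m) as Hm.
  destruct (Rle_or_lt 0 sg) as [Hp|Hn].
  - assert (1 <= (1 + INR m) ^ N) by (apply pow_R1_Rle; lra).
    pose proof (Rpower_opp_le_base c (c + INR m) sg ltac:(lra) Hp).
    pose proof (Rpower_pos c (- sg)). nra.
  - rewrite <- (Rpower_pow N (1 + INR m)) by lra.
    apply Rle_trans with (Rpower (c * (1 + INR m)) (- sg)).
    + apply Rle_Rpower_l; nra.
    + rewrite <- Rpower_mult_distr by lra.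
      apply Rmult_le_compat_l; [left; apply Rpower_pos|]. apply Rle_Rpower; lra.
Qed.

Lemma is_lim_seq_ratio_pow N : is_lim_seq (fun m => ((2 + INR m) / (1 + INR m)) ^ N) 1.
Proof.
  induction N as [|N IH]; [apply is_lim_seq_const|].
  assert (Hratio : is_lim_seq (fun m => (2 + INR m) / (1 + INR m)) 1).
  { apply (is_lim_seq_ext (fun m => 1 + / INR (S m))).
    - intros m. rewrite S_INR. field. pose proof (pos_INR m); lra.
    - assert (L : is_lim_seq (fun m => 1 + / INR (S m)) (1 + 0)).
      { apply is_lim_seq_plus'; [apply is_lim_seq_const|apply is_lim_seq_inv_INR_S]. }
      now rewrite Rplus_0_r in L. }
  pose proof (is_lim_seq_mult' _ _ _ _ Hratio IH) as L. now rewrite Rmult_1_r in L.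
Qed.

Lemma ex_series_pow_mult_poly_pos x N : 0 < x < 1 -> ex_series (fun m => x ^ m * (1 + INR m) ^ N).
Proof.
  intros Hx. apply ex_series_Rabs, (ex_series_DAlembert _ x); [lra| |].
  - intros n. apply Rgt_not_eq, Rmult_lt_0_compat; apply pow_lt; [lra|pose proof (pos_INR n); lra].
  - apply (is_lim_seq_ext (fun m => x * ((2 + INR m) / (1 + INR m)) ^ N)).
    + intros n. pose proof (pos_INR n). rewrite S_INR.
      assert (0 < x ^ n) by (apply pow_lt; lra).
      assert (0 < (1 + INR n) ^ N) by (apply pow_lt; lra).
      rewrite Rabs_pos_eq.
      * replace (1 + (INR n + 1)) with (2 + INR n) by ring.
        unfold Rdiv. rewrite Rpow_mult_distr, pow_inv. simpl pow. field. split; lra.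
      * apply Rlt_le, Rdiv_lt_0_compat; apply Rmult_lt_0_compat; try apply pow_lt; lra.
    + assert (L : is_lim_seq (fun m => x * ((2 + INR m) / (1 + INR m)) ^ N) (x * 1)).
      { apply is_lim_seq_mult'; [apply is_lim_seq_const|apply is_lim_seq_ratio_pow]. }
      now rewrite Rmult_1_r in L.
Qed.

Lemma ex_series_pow_mult_poly x N : 0 <= x < 1 -> ex_series (fun m => x ^ m * (1 + INR m) ^ N).
Proof.
  intros Hx. apply (ex_series_nonneg_le _ (fun m => ((1 + x) / 2) ^ m * (1 + INR m) ^ N)).
  - intros n. pose proof (pos_INR n). split.
    + apply Rmult_le_pos; apply pow_le; lra.
    + apply Rmult_le_compat_r; [apply pow_le; lra|apply pow_incr; lra].
  - apply ex_series_pow_mult_poly_pos; lra.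
Qed.

(* The integral-test estimate [y^(-p) <= int_(y-1)^y t^(-p) dt] in closed form. *)
Lemma Rpower_opp_le_telescoping y p : 1 < y -> 1 < p ->
  (p - 1) * Rpower y (- p) <= Rpower (y - 1) (- (p - 1)) - Rpower y (- (p - 1)).
Proof.
  intros Hy Hp.
  assert (E1 : Rpower y (- p) = Rpower y (- (p - 1)) * / y).
  { rewrite <- (Rpower_1 y) at 3 by lra. rewrite <- Rpower_Ropp, <- Rpower_plus. f_equal. ring. }
  assert (E2 : ln (y - 1) <= ln y - / y).
  { replace (y - 1) with (y * (1 - / y)) by (field; lra).
    assert (0 < / y < 1).
    { split; [apply Rinv_0_lt_compat; lra|]. rewrite <- Rinv_1. apply Rinv_lt_contravar; lra. }
    rewrite ln_mult by lra.
    pose proof (exp_ineq1_le (ln (1 - / y))) as Hln. rewrite exp_ln in Hln by lra. lra. }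
  assert (E3 : Rpower y (- (p - 1)) * exp ((p - 1) * / y) <= Rpower (y - 1) (- (p - 1))).
  { unfold Rpower. rewrite <- exp_plus. apply exp_le. nra. }
  pose proof (exp_ineq1_le ((p - 1) * / y)).
  pose proof (Rpower_pos y (- (p - 1))). rewrite E1. nra.
Qed.

Lemma Hurwitz_series_bound c p : 1 <= c -> 1 < p ->
  ex_series (fun m => Rpower (c + INR m) (- p)) /\
  Series (fun m => Rpower (c + INR m) (- p)) <= Rpower c (- (p - 1)) * (1 + / (p - 1)).
Proof.
  intros Hc Hp.
  set (u := fun m => Rpower (c + INR m) (- p)).
  set (M := Rpower c (- p) + Rpower c (- (p - 1)) / (p - 1)).
  assert (Hu : forall m, 0 <= u m) by (intros; left; apply Rpower_pos).
  assert (Htel : forall N, sum_n u N + Rpower (c + INR N) (- (p - 1)) / (p - 1) <= M).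
  { induction N as [|N IH].
    - rewrite sum_O. unfold u, M. simpl. rewrite Rplus_0_r. lra.
    - rewrite sum_Sn. change (sum_n u N + u (S N) + Rpower (c + INR (S N)) (- (p - 1)) / (p - 1) <= M).
      assert (Hy : 1 < c + INR (S N)) by (rewrite S_INR; pose proof (pos_INR N); lra).
      pose proof (Rpower_opp_le_telescoping (c + INR (S N)) p Hy Hp) as K.
      replace (c + INR (S N) - 1) with (c + INR N) in K by (rewrite S_INR; ring).
      assert (K' : u (S N) <=
                   (Rpower (c + INR N) (- (p - 1)) - Rpower (c + INR (S N)) (- (p - 1))) / (p - 1)).
      { apply (Rmult_le_reg_l (p - 1)); [lra|]. unfold Rdiv.
        now rewrite <- Rmult_assoc, Rinv_r_simpl_m by lra. }
      unfold Rdiv in *. lra. }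
  assert (Hbound : forall N, sum_n u N <= M).
  { intros N. specialize (Htel N).
    assert (0 <= Rpower (c + INR N) (- (p - 1)) / (p - 1))
      by (apply Rdiv_le_0_compat; [left; apply Rpower_pos|lra]).
    lra. }
  assert (Hex : ex_series u) by exact (ex_series_nonneg_bounded u M Hu Hbound).
  split; [exact Hex|].
  eapply Rle_trans; [exact (Series_le_bound u M Hbound Hex)|].
  unfold M. pose proof (Rpower_opp_le_rate c (p - 1) p Hc ltac:(lra)). unfold Rdiv. nra.
Qed.

Definition Lerch_region (z : C) (sg : R) (k : nat) : Prop :=
  Cmod z < 1 \/ (Cmod z = 1 /\ INR k < sg).

(* [PhiAux k z s c] decays like [c^(-(Re s - decay_loss z k))]: on the unit circle each of the
   [k] summations costs one power of [c]. *)
Definition decay_loss (z : C) (k : nat) : R := if Rlt_dec (Cmod z) 1 then 0 else INR k.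

Lemma Lerch_region_pred z sg k : Lerch_region z sg (S k) -> Lerch_region z sg k.
Proof. unfold Lerch_region. rewrite S_INR. intros [H|[H1 H2]]; [left|right]; auto. split; auto; lra. Qed.

Lemma Lerch_region_Cmod_le z sg k : Lerch_region z sg k -> Cmod z <= 1.
Proof. intros [H|[H _]]; lra. Qed.

Lemma exists_INR_ge r : exists N : nat, r <= INR N.
Proof.
  destruct (nfloor_ex (Rmax 0 r) (Rmax_l 0 r)) as [n [_ Hn]].
  exists (S n). rewrite S_INR. pose proof (Rmax_r 0 r). lra.
Qed.

Lemma Lerch_step_bound_disc z sg0 : Cmod z < 1 ->
  exists K, forall sg c, sg0 <= sg -> 1 <= c ->
    ex_series (fun m => Cmod z ^ m * Rpower (c + INR m) (- sg)) /\
    Series (fun m => Cmod z ^ m * Rpower (c + INR m) (- sg)) <= K * Rpower c (- sg).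
Proof.
  intros Hz. destruct (exists_INR_ge (- sg0)) as [N HN].
  assert (Hz0 : 0 <= Cmod z < 1) by (split; auto; apply Cmod_ge_0).
  exists (Series (fun m => Cmod z ^ m * (1 + INR m) ^ N)).
  intros sg c Hsg Hc.
  assert (Hle : forall m, 0 <= Cmod z ^ m * Rpower (c + INR m) (- sg)
                          <= Rpower c (- sg) * (Cmod z ^ m * (1 + INR m) ^ N)).
  { intros m. pose proof (pow_le (Cmod z) m (Cmod_ge_0 z)).
    pose proof (Rpower_opp_shift_le c sg N m Hc ltac:(lra)).
    pose proof (Rpower_pos (c + INR m) (- sg)). split; nra. }
  assert (Hex : ex_series (fun m => Rpower c (- sg) * (Cmod z ^ m * (1 + INR m) ^ N))).
  { apply (ex_series_scal_l (V := R_NormedModule)), ex_series_pow_mult_poly, Hz0. }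
  split; [exact (ex_series_nonneg_le _ _ Hle Hex)|].
  eapply Rle_trans; [exact (Series_le _ _ Hle Hex)|]. rewrite Series_scal_l. lra.
Qed.

Lemma Lerch_step_bound_circle z sg0 k : Cmod z = 1 -> INR (S k) < sg0 ->
  exists K, forall sg c, sg0 <= sg -> 1 <= c ->
    ex_series (fun m => Cmod z ^ m * Rpower (c + INR m) (- (sg - INR k))) /\
    Series (fun m => Cmod z ^ m * Rpower (c + INR m) (- (sg - INR k)))
      <= K * Rpower c (- (sg - INR (S k))).
Proof.
  intros Hz Hsg0. rewrite Hz. set (d := sg0 - INR (S k)).
  assert (Hd : 0 < d) by (unfold d; lra).
  exists (1 + / d). intros sg c Hsg Hc.
  assert (Hp : 1 < sg - INR k) by (pose proof (S_INR k); lra).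
  destruct (Hurwitz_series_bound c (sg - INR k) Hc Hp) as [Hex Hb].
  assert (E : forall m, 1 ^ m * Rpower (c + INR m) (- (sg - INR k)) = Rpower (c + INR m) (- (sg - INR k)))
    by (intros; rewrite pow1; ring).
  rewrite (Series_ext _ _ E). split; [exact (ex_series_ext _ _ (fun m => eq_sym (E m)) Hex)|].
  eapply Rle_trans; [exact Hb|].
  replace (sg - INR k - 1) with (sg - INR (S k)) by (rewrite S_INR; ring).
  rewrite Rmult_comm. apply Rmult_le_compat_r; [left; apply Rpower_pos|].
  apply Rplus_le_compat_l, Rinv_le_contravar; auto. unfold d. lra.
Qed.

Lemma Lerch_step_bound z sg0 k : Lerch_region z sg0 (S k) ->
  exists K, forall sg c, sg0 <= sg -> 1 <= c ->
    ex_series (fun m => Cmod z ^ m * Rpower (c + INR m) (- (sg - decay_loss z k))) /\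
    Series (fun m => Cmod z ^ m * Rpower (c + INR m) (- (sg - decay_loss z k)))
      <= K * Rpower c (- (sg - decay_loss z (S k))).
Proof.
  intros HR. unfold decay_loss. destruct (Rlt_dec (Cmod z) 1) as [Hz|Hz].
  - destruct (Lerch_step_bound_disc z sg0 Hz) as [K HK]. exists K. intros sg c Hsg Hc.
    rewrite !Rminus_0_r. now apply HK.
  - destruct HR as [H|[H1 H2]]; [lra|]. exact (Lerch_step_bound_circle z sg0 k H1 H2).
Qed.

Definition PhiAux_decay_bound (z : C) (sg0 : R) (k : nat) (K : R) : Prop :=
  forall s c, sg0 <= Re s -> 1 <= c -> Cmod (PhiAux k z s c) <= K * Rpower c (- (Re s - decay_loss z k)).

Lemma Cmod_PhiAux_le z sg0 k : Lerch_region z sg0 k -> exists K, 0 <= K /\ PhiAux_decay_bound z sg0 k K.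
Proof.
  induction k as [|k IH]; intros HR.
  - exists 1. split; [lra|]. intros s c Hs Hc. simpl PhiAux. rewrite Cmod_rpowC_opp.
    unfold decay_loss. destruct (Rlt_dec (Cmod z) 1); simpl; rewrite Rminus_0_r; lra.
  - destruct (IH (Lerch_region_pred _ _ _ HR)) as [K [HK0 HK]].
    destruct (Lerch_step_bound z sg0 k HR) as [K' HK'].
    exists (K * Rabs K'). split; [apply Rmult_le_pos; auto; apply Rabs_pos|].
    intros s c Hs Hc. destruct (HK' (Re s) c Hs Hc) as [Hex Hb].
    set (u := fun m => Cmod z ^ m * Rpower (c + INR m) (- (Re s - decay_loss z k))).
    assert (Hle : forall m, Cmod (Cmult (Cpow z m) (PhiAux k z s (c + INR m))) <= K * u m).
    { intros m. unfold u. rewrite Cmod_mult, Cmod_pow.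
      pose proof (HK s (c + INR m) Hs ltac:(pose proof (pos_INR m); lra)).
      pose proof (pow_le (Cmod z) m (Cmod_ge_0 z)). nra. }
    assert (Hex2 : ex_series (fun m => K * u m)) by exact (ex_series_scal_l (V := R_NormedModule) K u Hex).
    assert (Hsum : is_Cseries (fun m => Cmult (Cpow z m) (PhiAux k z s (c + INR m))) (PhiAux (S k) z s c)).
    { apply ex_series_Cmod_is_Cseries, (ex_series_nonneg_le _ _ (fun m => conj (Cmod_ge_0 _) (Hle m)) Hex2). }
    eapply Rle_trans; [exact (is_Cseries_Cmod_le _ _ _ _ Hsum Hle (Series_correct _ Hex2))|].
    rewrite Series_scal_l, Rmult_assoc. apply Rmult_le_compat_l; auto.
    eapply Rle_trans; [exact Hb|]. apply Rmult_le_compat_r; [left; apply Rpower_pos|apply Rle_abs].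
Qed.

Lemma is_Cseries_PhiAux_S z sg0 k s c : Lerch_region z sg0 (S k) -> sg0 <= Re s -> 0 < c ->
  is_Cseries (fun m => Cmult (Cpow z m) (PhiAux k z s (c + INR m))) (PhiAux (S k) z s c).
Proof.
  intros HR Hs Hc.
  destruct (Cmod_PhiAux_le z sg0 k (Lerch_region_pred _ _ _ HR)) as [K [HK0 HK]].
  destruct (Lerch_step_bound z sg0 k HR) as [K' HK'].
  destruct (HK' (Re s) (c + 1) Hs ltac:(lra)) as [Hex _].
  (* Only the tail [m >= 1] is estimated, where the shifted parameter [c + m] is at least 1. *)
  apply ex_series_Cmod_is_Cseries.
  apply (ex_series_incr_1 (V := R_NormedModule)
           (fun m => Cmod (Cmult (Cpow z m) (PhiAux k z s (c + INR m))))).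
  apply (ex_series_nonneg_le _
           (fun m => K * (Cmod z ^ m * Rpower (c + 1 + INR m) (- (Re s - decay_loss z k))))).
  - intros m. split; [apply Cmod_ge_0|]. rewrite Cmod_mult, Cmod_pow.
    replace (c + INR (S m)) with (c + 1 + INR m) by (rewrite S_INR; ring).
    pose proof (HK s (c + 1 + INR m) Hs ltac:(pose proof (pos_INR m); lra)).
    assert (Cmod z ^ S m <= Cmod z ^ m).
    { simpl. pose proof (Lerch_region_Cmod_le _ _ _ HR). pose proof (pow_le (Cmod z) m (Cmod_ge_0 z)).
      pose proof (Cmod_ge_0 z). nra. }
    pose proof (pow_le (Cmod z) (S m) (Cmod_ge_0 z)).
    pose proof (Rpower_pos (c + 1 + INR m) (- (Re s - decay_loss z k))).
    pose proof (Cmod_ge_0 (PhiAux k z s (c + 1 + INR m))). nra.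
  - exact (ex_series_scal_l (V := R_NormedModule) K _ Hex).
Qed.

(** * Expansion in the shift parameter *)

Lemma Re_plus_INR s l : Re (Cplus s (RtoC (INR l))) = Re s + INR l.
Proof. now destruct s. Qed.

Lemma Cmod_PhiAux_plus_INR_le z sg0 k K s c l :
  PhiAux_decay_bound z sg0 k K -> sg0 <= Re s -> 1 <= c ->
  Cmod (PhiAux k z (Cplus s (RtoC (INR l))) c) <= K * Rpower c (- (Re s - decay_loss z k)) * / c ^ l.
Proof.
  intros HK Hs Hc.
  specialize (HK (Cplus s (RtoC (INR l))) c). rewrite Re_plus_INR in HK.
  replace (Re s + INR l - decay_loss z k) with (Re s - decay_loss z k + INR l) in HK by ring.
  rewrite Rpower_opp_plus_INR, <- Rmult_assoc in HK by lra.
  apply HK; [pose proof (pos_INR l); lra|exact Hc].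
Qed.

Lemma is_Cseries_rpowC_shift s c a : 0 < c -> Rabs a < c ->
  is_Cseries (fun l => Cmult (Cmult (binomC (Copp s) l) (RtoC (a ^ l)))
                              (rpowC c (Copp (Cplus s (RtoC (INR l))))))
             (rpowC (c + a) (Copp s)).
Proof.
  intros Hc Ha.
  assert (Hac : Rabs (a / c) < 1).
  { unfold Rdiv. rewrite Rabs_mult, Rabs_inv, (Rabs_pos_eq c) by lra.
    apply (Rmult_lt_reg_r c); [lra|]. now rewrite Rmult_assoc, Rinv_l, Rmult_1_r, Rmult_1_l by lra. }
  replace (c + a) with (c * (1 + a / c)) by (field; lra).
  rewrite rpowC_mult by (try apply Rabs_def2 in Hac; lra).
  eapply is_Cseries_ext; [|exact (is_Cseries_scal _ _ _ (is_Cseries_binomial (Copp s) (a / c) Hac))].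
  intros l. simpl. rewrite rpowC_opp_plus_INR by lra.
  unfold Rdiv. rewrite Rpow_mult_distr, pow_inv, RtoC_mult. ring.
Qed.

Lemma Cmod_shift_term_le z sg0 k K s c a i j :
  PhiAux_decay_bound z sg0 k K -> 0 <= K -> sg0 <= Re s -> 1 <= c ->
  Cmod (Cmult (Cpow z i) (Cmult (Cmult (binomC (Copp s) j) (RtoC (a ^ j)))
                               (PhiAux k z (Cplus s (RtoC (INR j))) (c + INR i))))
  <= K * (Cmod z ^ i * Rpower (c + INR i) (- (Re s - decay_loss z k)))
     * (Cmod (binomC (Copp s) j) * (Rabs a / c) ^ j).
Proof.
  intros HK HK0 Hs Hc. rewrite !Cmod_mult, Cmod_pow, Cmod_R, <- RPow_abs.
  pose proof (pos_INR i) as Hi.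
  pose proof (Cmod_PhiAux_plus_INR_le z sg0 k K s (c + INR i) j HK Hs ltac:(lra)) as HB.
  set (X := Cmod (PhiAux k z (Cplus s (RtoC (INR j))) (c + INR i))) in *.
  set (P := Rpower (c + INR i) (- (Re s - decay_loss z k))) in *.
  set (B := Cmod (binomC (Copp s) j)).
  assert (Hpow : Rabs a ^ j * / (c + INR i) ^ j <= (Rabs a / c) ^ j).
  { rewrite <- pow_inv, <- Rpow_mult_distr. apply pow_incr. split.
    - apply Rmult_le_pos; [apply Rabs_pos|left; apply Rinv_0_lt_compat; lra].
    - apply Rmult_le_compat_l; [apply Rabs_pos|apply Rinv_le_contravar; lra]. }
  assert (HX : Rabs a ^ j * X <= K * P * (Rabs a / c) ^ j).
  { eapply Rle_trans; [apply Rmult_le_compat_l; [apply pow_le, Rabs_pos|exact HB]|].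
    replace (Rabs a ^ j * (K * P * / (c + INR i) ^ j)) with (K * P * (Rabs a ^ j * / (c + INR i) ^ j))
      by ring.
    apply Rmult_le_compat_l; auto. apply Rmult_le_pos; [lra|left; apply Rpower_pos]. }
  assert (HzB : 0 <= Cmod z ^ i * B) by (apply Rmult_le_pos; [apply pow_le, Cmod_ge_0|apply Cmod_ge_0]).
  pose proof (Rmult_le_compat_l _ _ _ HzB HX). nra.
Qed.

Lemma is_Cseries_PhiAux_shift z sg0 k : Lerch_region z sg0 k -> forall s c a,
  sg0 <= Re s -> 1 <= c -> Rabs a < c ->
  is_Cseries (fun l => Cmult (Cmult (binomC (Copp s) l) (RtoC (a ^ l)))
                              (PhiAux k z (Cplus s (RtoC (INR l))) c))
             (PhiAux k z s (c + a)).
Proof.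
  induction k as [|k IH]; intros HR s c a Hs Hc Ha.
  { apply is_Cseries_rpowC_shift; lra. }
  destruct (Cmod_PhiAux_le z sg0 k (Lerch_region_pred _ _ _ HR)) as [K [HK0 HK]].
  destruct (Lerch_step_bound z sg0 k HR) as [K' HK'].
  destruct (HK' (Re s) c Hs Hc) as [Hex _].
  set (sg := Re s - decay_loss z k).
  set (r := Rabs a / c).
  assert (Hr : 0 <= r < 1).
  { unfold r. split; [apply Rdiv_le_0_compat; [apply Rabs_pos|lra]|].
    apply (Rmult_lt_reg_r c); [lra|]. unfold Rdiv.
    now rewrite Rmult_assoc, Rinv_l, Rmult_1_r, Rmult_1_l by lra. }
  set (A := fun i j => Cmult (Cpow z i) (Cmult (Cmult (binomC (Copp s) j) (RtoC (a ^ j)))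
                          (PhiAux k z (Cplus s (RtoC (INR j))) (c + INR i)))).
  assert (Hdouble : is_Cseries (fun j => CSeries (fun i => A i j)) (CSeries (fun i => CSeries (A i)))).
  { refine (proj2 (is_Cseries_double_product A (fun i => K * (Cmod z ^ i * Rpower (c + INR i) (- sg)))
                                       (fun j => Cmod (binomC (Copp s) j) * r ^ j) _ _ _)).
    - intros i j. exact (Cmod_shift_term_le z sg0 k K s c a i j HK HK0 Hs Hc).
    - exact (ex_series_scal_l (V := R_NormedModule) K _ Hex).
    - exact (ex_series_Cmod_binomC (Copp s) r Hr). }
  replace (PhiAux (S k) z s (c + a)) with (CSeries (fun i => CSeries (A i))).
  - eapply is_Cseries_ext; [|exact Hdouble]. intros j. unfold A.
    apply is_Cseries_unique.
    eapply is_Cseries_ext; [|exact (is_Cseries_scal (Cmult (binomC (Copp s) j) (RtoC (a ^ j))) _ _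
      (is_Cseries_PhiAux_S z sg0 k (Cplus s (RtoC (INR j))) c HR
         ltac:(rewrite Re_plus_INR; pose proof (pos_INR j); lra) ltac:(lra)))].
    intros i. simpl. ring.
  - apply is_Cseries_unique.
    eapply is_Cseries_ext; [|exact (is_Cseries_PhiAux_S z sg0 k s (c + a) HR Hs
                                      ltac:(apply Rabs_def2 in Ha; lra))].
    intros i. unfold A. symmetry.
    rewrite (is_Cseries_unique _ _ (is_Cseries_scal (Cpow z i) _ _
               (IH (Lerch_region_pred _ _ _ HR) s (c + INR i) a Hs
                  ltac:(pose proof (pos_INR i); lra) ltac:(pose proof (pos_INR i); lra)))).
    do 2 f_equal. ring.
Qed.

(** * Jackson integrals *)

Definition qpoint (q : R) (n : nat) : R := / q ^ S n.

Definition is_jackson (q : R) (f : R -> C) (v : C) : Prop :=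
  is_Cseries (fun n => Cmult (f (qpoint q n)) (RtoC (qpoint q n))) (Cmult (RtoC (/ (q - 1))) v).

Lemma qpoint_bounds q n : 1 < q -> 0 < qpoint q n <= / q.
Proof.
  intros Hq. unfold qpoint. split; [apply Rinv_0_lt_compat, pow_lt; lra|].
  apply Rinv_le_contravar; [lra|]. simpl. rewrite <- (Rmult_1_r q) at 1.
  apply Rmult_le_compat_l; [lra|apply pow_R1_Rle; lra].
Qed.

Lemma is_series_qpoint_pow q l : 1 < q -> is_series (fun n => qpoint q n ^ S l) (/ (q ^ S l - 1)).
Proof.
  intros Hq.
  assert (Hql : 1 < q ^ S l) by (apply Rlt_pow_R1; [lra|lia]).
  set (rho := / q ^ S l).
  assert (Hrho : Rabs rho < 1).
  { unfold rho. rewrite Rabs_pos_eq by (left; apply Rinv_0_lt_compat; lra).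
    rewrite <- Rinv_1. apply Rinv_lt_contravar; lra. }
  replace (/ (q ^ S l - 1)) with (rho * / (1 - rho)) by (unfold rho; field; lra).
  eapply is_series_ext; [|exact (is_series_scal_l (V := R_NormedModule) rho _ _ (is_series_geom _ Hrho))].
  intros n. change (rho * rho ^ n = qpoint q n ^ S l).
  unfold rho, qpoint. rewrite <- !pow_inv, <- !pow_mult, <- pow_add. f_equal. lia.
Qed.

Lemma jackson_ext q f g : (forall n, f (qpoint q n) = g (qpoint q n)) -> jackson q f = jackson q g.
Proof. intros H. unfold jackson, qpoint in *. f_equal. apply CSeries_ext. intros n. now rewrite H. Qed.

Lemma is_jackson_unique q f v : 1 < q -> is_jackson q f v -> jackson q f = v.
Proof.
  intros Hq H. unfold jackson. change (/ q ^ S ?n) with (qpoint q n).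
  rewrite (is_Cseries_unique _ _ H), Cmult_assoc, <- RtoC_mult.
  rewrite Rinv_r by lra. apply Cmult_1_l.
Qed.

Lemma is_jackson_ext q f g v :
  (forall n, f (qpoint q n) = g (qpoint q n)) -> is_jackson q f v -> is_jackson q g v.
Proof. intros H. apply is_Cseries_ext. intros n. now rewrite H. Qed.

Lemma is_jackson_scal q w f v : is_jackson q f v -> is_jackson q (fun a => Cmult w (f a)) (Cmult w v).
Proof.
  intros H. unfold is_jackson.
  replace (Cmult (RtoC (/ (q - 1))) (Cmult w v)) with (Cmult w (Cmult (RtoC (/ (q - 1))) v)) by ring.
  eapply is_Cseries_ext; [|exact (is_Cseries_scal w _ _ H)]. intros n. simpl. ring.
Qed.

Lemma is_jackson_plus q f g v w :
  is_jackson q f v -> is_jackson q g w -> is_jackson q (fun a => Cplus (f a) (g a)) (Cplus v w).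
Proof.
  intros Hf Hg. unfold is_jackson. rewrite Cmult_plus_distr_l.
  eapply is_Cseries_ext; [|exact (is_Cseries_plus _ _ _ _ Hf Hg)]. intros n. simpl. ring.
Qed.

Lemma is_jackson_sum_n q (f : nat -> R -> C) (v : nat -> C) N :
  (forall j, (j <= N)%nat -> is_jackson q (f j) (v j)) ->
  is_jackson q (fun a => sum_n (fun j => f j a) N) (sum_n v N).
Proof.
  intros H. unfold is_jackson.
  rewrite <- (sum_n_mult_l (K := C_Ring)).
  eapply is_Cseries_ext;
    [|exact (is_Cseries_sum_n (fun n j => Cmult (f j (qpoint q n)) (RtoC (qpoint q n))) _ N H)].
  intros n. exact (sum_n_mult_r (K := C_Ring) _ _ N).
Qed.

Lemma qnum_INR_S q l : 1 < q -> qnum q (RtoC (INR (l + 1))) = RtoC ((q ^ S l - 1) / (q - 1)).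
Proof.
  intros Hq. unfold qnum. rewrite rpowC_RtoC, exp_INR_ln by lra.
  replace (l + 1)%nat with (S l) by lia.
  now rewrite <- RtoC_minus, <- RtoC_div by lra.
Qed.

Lemma Cdiv_qnum_INR_S q l w : 1 < q ->
  Cdiv w (qnum q (RtoC (INR (l + 1)))) = Cmult (RtoC (q - 1)) (Cmult w (RtoC (/ (q ^ S l - 1)))).
Proof.
  intros Hq. assert (1 < q ^ S l) by (apply Rlt_pow_R1; [lra|lia]).
  rewrite qnum_INR_S by auto. unfold Cdiv.
  rewrite <- RtoC_inv by (apply Rgt_not_eq, Rdiv_lt_0_compat; lra).
  replace (/ ((q ^ S l - 1) / (q - 1))) with ((q - 1) * / (q ^ S l - 1)) by (field; lra).
  rewrite RtoC_mult. ring.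
Qed.

Lemma is_jackson_rpowC_opp q s : 1 < q -> Re s < 1 ->
  is_jackson q (fun a => rpowC a (Copp s)) (Cinv (qnum q (Cminus (RtoC 1) s))).
Proof.
  intros Hq Hs.
  assert (Hlnq : 0 < ln q) by (rewrite <- ln_1; apply ln_increasing; lra).
  set (Q := rpowC q (Cminus (RtoC 1) s)).
  set (rho := rpowC (/ q) (Cminus (RtoC 1) s)).
  assert (Hrho : Cmod rho < 1).
  { unfold rho. rewrite Cmod_rpowC, ln_Rinv by lra.
    apply (Rlt_le_trans _ (exp 0)); [apply exp_increasing|rewrite exp_0; lra].
    replace (Re (Cminus (RtoC 1) s)) with (1 - Re s) by (destruct s; simpl; ring). nra. }
  assert (HQrho : Cmult rho Q = RtoC 1).
  { unfold rho, Q. rewrite <- rpowC_mult by (try apply Rinv_0_lt_compat; lra).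
    rewrite Rinv_l by lra. apply rpowC_1. }
  assert (HQ1 : Cminus Q (RtoC 1) <> RtoC 0).
  { intros E. assert (HQ : Q = RtoC 1).
    { replace Q with (Cplus (Cminus Q (RtoC 1)) (RtoC 1)) by ring. rewrite E. apply C_ext; simpl; ring. }
    rewrite HQ, Cmult_1_r in HQrho. rewrite HQrho, Cmod_1 in Hrho. lra. }
  assert (HQ0 : Q <> RtoC 0).
  { intros E. rewrite E, Cmult_0_r in HQrho. apply (f_equal fst) in HQrho. simpl in HQrho. lra. }
  unfold is_jackson.
  replace (Cmult (RtoC (/ (q - 1))) (Cinv (qnum q (Cminus (RtoC 1) s))))
    with (Cdiv rho (Cminus (RtoC 1) rho)).
  - eapply is_Cseries_ext; [|exact (is_Cseries_geom_S rho Hrho)]. intros n.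
    destruct (qpoint_bounds q n Hq) as [Hp _].
    unfold rho. rewrite <- rpowC_pow, pow_inv by (apply Rinv_0_lt_compat; lra). fold (qpoint q n).
    rewrite <- (rpowC_1_r (qpoint q n)), <- rpowC_plus by exact Hp.
    f_equal. apply C_ext; simpl; ring.
  - assert (Hrho_Q : rho = Cinv Q).
    { transitivity (Cmult (Cmult rho Q) (Cinv Q)); [field; exact HQ0|].
      now rewrite HQrho, Cmult_1_l. }
    unfold qnum. fold Q. rewrite Hrho_Q, RtoC_inv by lra.
    field. repeat split; auto. apply RtoC_neq0. lra.
Qed.

Lemma Cmod_jackson_term_le z sg0 k K s c eps x r l :
  PhiAux_decay_bound z sg0 k K -> 0 <= K -> sg0 <= Re s -> 1 <= c -> Rabs eps = 1 -> 0 < x <= r ->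
  Cmod (Cmult (Cmult (Cmult (Cmult (binomC (Copp s) l) (RtoC (eps ^ l)))
                            (PhiAux k z (Cplus s (RtoC (INR l))) c)) (RtoC (x ^ l))) (RtoC x))
  <= K * Rpower c (- (Re s - decay_loss z k)) * x * (Cmod (binomC (Copp s) l) * r ^ l).
Proof.
  intros HK HK0 Hs Hc Heps Hx.
  rewrite !Cmod_mult, !Cmod_R, <- !RPow_abs, Heps, pow1, (Rabs_pos_eq x) by lra.
  pose proof (Cmod_PhiAux_plus_INR_le z sg0 k K s c l HK Hs Hc) as HB.
  set (KW := K * Rpower c (- (Re s - decay_loss z k))) in *.
  set (X := Cmod (PhiAux k z (Cplus s (RtoC (INR l))) c)) in *.
  assert (Hcl : / c ^ l <= 1).
  { rewrite <- Rinv_1. apply Rinv_le_contravar; [lra|apply pow_R1_Rle; lra]. }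
  assert (HKW : 0 <= KW) by (apply Rmult_le_pos; [lra|left; apply Rpower_pos]).
  assert (HXKW : X <= KW) by nra.
  assert (HxX : x ^ l * X <= r ^ l * KW).
  { apply Rmult_le_compat; auto; [apply pow_le; lra|apply Cmod_ge_0|apply pow_incr; lra]. }
  assert (HBx : 0 <= Cmod (binomC (Copp s) l) * x) by (pose proof (Cmod_ge_0 (binomC (Copp s) l)); nra).
  pose proof (Rmult_le_compat_l _ _ _ HBx HxX). nra.
Qed.

Lemma is_jackson_PhiAux_shift q z sg0 k s c eps :
  1 < q -> Lerch_region z sg0 k -> sg0 <= Re s -> 1 <= c -> Rabs eps = 1 ->
  exists v,
    is_Cseries (fun l => Cdiv (Cmult (Cmult (binomC (Copp s) l) (RtoC (eps ^ l)))
                                     (PhiAux k z (Cplus s (RtoC (INR l))) c))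
                              (qnum q (RtoC (INR (l + 1))))) v /\
    is_jackson q (fun a => PhiAux k z s (c + eps * a)) v.
Proof.
  intros Hq HR Hs Hc Heps.
  destruct (Cmod_PhiAux_le z sg0 k HR) as [K [HK0 HK]].
  set (KW := K * Rpower c (- (Re s - decay_loss z k))).
  set (coef := fun l => Cmult (Cmult (binomC (Copp s) l) (RtoC (eps ^ l)))
                              (PhiAux k z (Cplus s (RtoC (INR l))) c)).
  assert (Hq' : 0 <= / q < 1).
  { split; [left; apply Rinv_0_lt_compat; lra|]. rewrite <- Rinv_1. apply Rinv_lt_contravar; lra. }
  set (A := fun n l => Cmult (Cmult (coef l) (RtoC (qpoint q n ^ l))) (RtoC (qpoint q n))).
  destruct (is_Cseries_double_product A (fun n => KW * qpoint q n)
              (fun l => Cmod (binomC (Copp s) l) * (/ q) ^ l)) as [Hrows Hcols].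
  - intros n l. unfold A, coef.
    exact (Cmod_jackson_term_le z sg0 k K s c eps _ _ l HK HK0 Hs Hc Heps (qpoint_bounds q n Hq)).
  - apply (ex_series_scal_l (V := R_NormedModule) KW).
    exists (/ (q ^ 1 - 1)). eapply is_series_ext; [|exact (is_series_qpoint_pow q 0 Hq)].
    intros n. apply pow_1.
  - apply ex_series_Cmod_binomC, Hq'.
  - set (T := CSeries (fun n => CSeries (A n))) in *.
    assert (Hcoef : is_Cseries (fun l => Cdiv (coef l) (qnum q (RtoC (INR (l + 1)))))
                               (Cmult (RtoC (q - 1)) T)).
    { eapply is_Cseries_ext; [|exact (is_Cseries_scal (RtoC (q - 1)) _ _ Hcols)]. intros l.
      rewrite Cdiv_qnum_INR_S by auto. f_equal. apply is_Cseries_unique.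
      eapply is_Cseries_ext;
        [|exact (is_Cseries_scal (coef l) _ _ (is_Cseries_RtoC _ _ (is_series_qpoint_pow q l Hq)))].
      intros n. unfold A. simpl pow. rewrite RtoC_mult. ring. }
    exists (Cmult (RtoC (q - 1)) T). split; [exact Hcoef|].
    unfold is_jackson. rewrite Cmult_assoc, <- RtoC_mult, Rinv_l, Cmult_1_l by lra.
    eapply is_Cseries_ext; [|exact Hrows]. intros n. destruct (qpoint_bounds q n Hq) as [Hp1 Hp2].
    assert (Hshift : Rabs (eps * qpoint q n) < c).
    { rewrite Rabs_mult, Heps, Rabs_pos_eq by lra. assert (/ q < 1) by lra. lra. }
    rewrite Cmult_comm. apply is_Cseries_unique.
    eapply is_Cseries_ext; [|exact (is_Cseries_scal (RtoC (qpoint q n)) _ _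
                                      (is_Cseries_PhiAux_shift z sg0 k HR s c _ Hs Hc Hshift))].
    intros l. unfold A, coef. rewrite Rpow_mult_distr, RtoC_mult. ring.
Qed.

(** * The Lipschitz-Lerch sums *)

Lemma LiAux_PhiAux z sg0 j : Lerch_region z sg0 j -> forall s c, sg0 <= Re s -> 0 <= c ->
  LiAux j z s c = Cmult (Cpow z j) (PhiAux j z s (c + INR j)).
Proof.
  induction j as [|j IH]; intros HR s c Hs Hc.
  { simpl. rewrite Rplus_0_r. ring. }
  assert (Hcj : 0 < c + INR (S j)) by (pose proof (lt_0_INR (S j) ltac:(lia)); lra).
  change (LiAux (S j) z s c) with (CSeries (fun m => Cmult (Cpow z (S m)) (LiAux j z s (c + INR (S m))))).
  apply is_Cseries_unique.
  eapply is_Cseries_ext;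
    [|exact (is_Cseries_scal (Cpow z (S j)) _ _ (is_Cseries_PhiAux_S z sg0 j s _ HR Hs Hcj))].
  intros m. rewrite (IH (Lerch_region_pred _ _ _ HR) s (c + INR (S m)) Hs
                        ltac:(pose proof (pos_INR (S m)); lra)).
  replace (c + INR (S m) + INR j) with (c + INR (S j) + INR m) by (rewrite !S_INR; ring).
  rewrite !Cmult_assoc, <- !Cpow_add_r. do 2 f_equal. lia.
Qed.

Lemma is_Cseries_LiAux_S z sg0 j s c : Lerch_region z sg0 (S j) -> sg0 <= Re s -> 0 <= c ->
  is_Cseries (fun m => Cmult (Cpow z (S m)) (LiAux j z s (c + INR (S m)))) (LiAux (S j) z s c).
Proof.
  intros HR Hs Hc.
  assert (Hcj : 0 < c + INR (S j)) by (pose proof (lt_0_INR (S j) ltac:(lia)); lra).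
  rewrite (LiAux_PhiAux z sg0 (S j) HR s c Hs Hc).
  eapply is_Cseries_ext;
    [|exact (is_Cseries_scal (Cpow z (S j)) _ _ (is_Cseries_PhiAux_S z sg0 j s _ HR Hs Hcj))].
  intros m. rewrite (LiAux_PhiAux z sg0 j (Lerch_region_pred _ _ _ HR) s (c + INR (S m)) Hs
                       ltac:(pose proof (pos_INR (S m)); lra)).
  replace (c + INR (S m) + INR j) with (c + INR (S j) + INR m) by (rewrite !S_INR; ring).
  rewrite !Cmult_assoc, <- !Cpow_add_r. do 2 f_equal. lia.
Qed.

Lemma Li_plus_INR z s k l : Lerch_region z (Re s) k ->
  Li k z (Cplus s (RtoC (INR l))) = Cmult (Cpow z k) (PhiAux k z (Cplus s (RtoC (INR l))) (INR k)).
Proof.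
  intros HR. unfold Li. rewrite (LiAux_PhiAux z (Re s) k HR), Rplus_0_l; [reflexivity| |lra].
  rewrite Re_plus_INR. pose proof (pos_INR l). lra.
Qed.

Lemma is_jackson_PhiAux_INR_shift q z k s eps :
  1 < q -> (0 < k)%nat -> Lerch_region z (Re s) k -> Rabs eps = 1 ->
  exists v,
    is_Cseries (fun l => Cdiv (Cmult (Cmult (binomC (Copp s) l) (RtoC (eps ^ l)))
                                     (Li k z (Cplus s (RtoC (INR l)))))
                              (qnum q (RtoC (INR (l + 1))))) v /\
    is_jackson q (fun a => Cmult (Cpow z k) (PhiAux k z s (INR k + eps * a))) v.
Proof.
  intros Hq Hk HR Heps.
  destruct (is_jackson_PhiAux_shift q z (Re s) k s (INR k) eps Hq HR (Rle_refl _)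
              ltac:(apply (le_INR 1); lia) Heps) as [v [Hv Hj]].
  exists (Cmult (Cpow z k) v). split; [|exact (is_jackson_scal _ _ _ _ Hj)].
  eapply is_Cseries_ext; [|exact (is_Cseries_scal (Cpow z k) _ _ Hv)].
  intros l. rewrite Li_plus_INR by auto. unfold Cdiv. ring.
Qed.

Lemma is_jackson_LiAux q z j s : 1 < q -> (0 < j)%nat -> Cmod z < 1 ->
  is_jackson q (fun a => LiAux j z s a)
    (CSeries (fun l => Cdiv (Cmult (binomC (Copp s) l) (Li j z (Cplus s (RtoC (INR l)))))
                            (qnum q (RtoC (INR (l + 1)))))).
Proof.
  intros Hq Hj Hz.
  destruct (is_jackson_PhiAux_INR_shift q z j s 1 Hq Hj (or_introl Hz) Rabs_R1) as [v [Hv Hjack]].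
  erewrite CSeries_ext, (is_Cseries_unique _ _ Hv).
  - eapply is_jackson_ext; [|exact Hjack]. intros n. destruct (qpoint_bounds q n Hq) as [Hp _].
    rewrite (LiAux_PhiAux z (Re s) j (or_introl Hz) s (qpoint q n) (Rle_refl _)) by lra.
    do 2 f_equal. ring.
  - intros l. cbv beta. now rewrite pow1, Cmult_1_r.
Qed.

Lemma jackson_Phi_INR_shift q z k s eps :
  1 < q -> (0 < k)%nat -> z <> RtoC 0 -> Lerch_region z (Re s) k -> Rabs eps = 1 ->
  jackson q (fun a => Phi k z s (INR k + eps * a)) =
  Cmult (Cinv (Cpow z k))
    (CSeries (fun l => Cdiv (Cmult (Cmult (binomC (Copp s) l) (RtoC (eps ^ l)))
                                   (Li k z (Cplus s (RtoC (INR l)))))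
                            (qnum q (RtoC (INR (l + 1)))))).
Proof.
  intros Hq Hk Hz HR Heps.
  destruct (is_jackson_PhiAux_INR_shift q z k s eps Hq Hk HR Heps) as [v [Hv Hj]].
  assert (Hzk : Cpow z k <> RtoC 0) by (apply Cpow_nz, Hz).
  rewrite (is_Cseries_unique _ _ Hv).
  apply is_jackson_unique; [exact Hq|].
  eapply is_jackson_ext; [|exact (is_jackson_scal q (Cinv (Cpow z k)) _ _ Hj)].
  intros n. unfold Phi. field. exact Hzk.
Qed.

(** * Decomposition into Lipschitz-Lerch sums *)

Lemma binomial_0_r k : Binomial.C k 0 = 1.
Proof. unfold Binomial.C. rewrite Nat.sub_0_r. simpl. field. apply INR_fact_neq_0. Qed.

Lemma binomial_sym k r : (r <= k)%nat -> Binomial.C k (k - r) = Binomial.C k r.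
Proof.
  intros H. unfold Binomial.C. replace (k - (k - r))%nat with r by lia.
  now rewrite (Rmult_comm (INR (fact (k - r)))).
Qed.

(* The top coefficient is treated apart: [Binomial.C k (S k)] is not 0. *)
Lemma Csum_binomial_pascal (f : nat -> C) k :
  sum_n (fun j => Cmult (RtoC (Binomial.C k j)) (Cplus (f j) (f (S j)))) k =
  sum_n (fun j => Cmult (RtoC (Binomial.C (S k) j)) (f j)) (S k).
Proof.
  destruct k as [|k].
  { rewrite Csum_Sn, !sum_O, !binomial_0_r, C_n_n. ring_C. }
  rewrite (sum_n_ext _ (fun j => Cplus (Cmult (RtoC (Binomial.C (S k) j)) (f j))
                                       (Cmult (RtoC (Binomial.C (S k) j)) (f (S j)))))
    by (intros; ring_C).
  rewrite Csum_plus, Csum_shift, (Csum_shift (fun j => Cmult _ (f j))), Csum_Sn,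
    (Csum_Sn (fun j => Cmult _ (f (S j)))).
  rewrite !binomial_0_r, !C_n_n.
  assert (Hpascal : sum_n (fun j => Cmult (RtoC (Binomial.C (S (S k)) (S j))) (f (S j))) k =
                    Cplus (sum_n (fun j => Cmult (RtoC (Binomial.C (S k) (S j))) (f (S j))) k)
                          (sum_n (fun j => Cmult (RtoC (Binomial.C (S k) j)) (f (S j))) k)).
  { rewrite <- Csum_plus. apply sum_n_ext_loc. intros j Hj.
    rewrite <- (pascal (S k) j) by lia. rewrite RtoC_plus. ring_C. }
  rewrite Hpascal. ring_C.
Qed.

Lemma is_Cseries_LiAux_shift z s j c : Cmod z < 1 -> 0 <= c ->
  is_Cseries (fun m => Cmult (Cpow z m) (LiAux j z s (c + INR m)))
             (Cplus (LiAux j z s c) (LiAux (S j) z s c)).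
Proof.
  intros Hz Hc.
  apply (is_series_decr_1 (K := C_AbsRing) (V := C_NormedModule)).
  match goal with |- is_series _ ?v => replace v with (LiAux (S j) z s c) end.
  - exact (is_Cseries_LiAux_S z (Re s) j s c (or_introl Hz) (Rle_refl _) Hc).
  - change (LiAux (S j) z s c = Cplus (Cplus (LiAux j z s c) (LiAux (S j) z s c))
                                     (Copp (Cmult (Cpow z 0) (LiAux j z s (c + INR 0))))).
    rewrite Rplus_0_r. simpl Cpow. ring.
Qed.

Lemma PhiAux_binomial_LiAux z s k c : Cmod z < 1 -> 0 < c ->
  PhiAux k z s c = sum_n (fun j => Cmult (RtoC (Binomial.C k j)) (LiAux j z s c)) k.
Proof.
  intros Hz. revert c. induction k as [|k IH]; intros c Hc.
  { rewrite sum_O, binomial_0_r. symmetry. apply Cmult_1_l. }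
  change (PhiAux (S k) z s c) with (CSeries (fun m => Cmult (Cpow z m) (PhiAux k z s (c + INR m)))).
  rewrite <- Csum_binomial_pascal. apply is_Cseries_unique.
  eapply is_Cseries_ext; [|exact (is_Cseries_sum_n
     (fun m j => Cmult (RtoC (Binomial.C k j)) (Cmult (Cpow z m) (LiAux j z s (c + INR m)))) _ k
     (fun j _ => is_Cseries_scal _ _ _ (is_Cseries_LiAux_shift z s j c Hz ltac:(lra))))].
  intros m. rewrite (IH (c + INR m)) by (pose proof (pos_INR m); lra).
  rewrite Csum_mult_l. apply sum_n_ext. intros j. ring_C.
Qed.

Lemma jackson_Phi_Lipschitz_Lerch q k z s : 1 < q -> (0 < k)%nat -> Cmod z < 1 -> Re s < 1 ->
  jackson q (fun a => Phi k z s a) =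
  Cplus (Cinv (qnum q (Cminus (RtoC 1) s)))
    (sum_n (fun r => Cmult (RtoC (Binomial.C k r))
       (CSeries (fun l => Cdiv (Cmult (binomC (Copp s) l) (Li (k - r) z (Cplus s (RtoC (INR l)))))
                               (qnum q (RtoC (INR (l + 1)))))))
       (k - 1)).
Proof.
  intros Hq Hk Hz Hs. destruct k as [|k]; [lia|]. replace (S k - 1)%nat with k by lia.
  apply is_jackson_unique; [exact Hq|].
  apply (is_jackson_ext q (fun a => Cplus (LiAux 0 z s a)
            (sum_n (fun j => Cmult (RtoC (Binomial.C (S k) (S j))) (LiAux (S j) z s a)) k))).
  { intros n. destruct (qpoint_bounds q n Hq) as [Hp _]. unfold Phi.
    rewrite (PhiAux_binomial_LiAux z s (S k) (qpoint q n) Hz Hp), Csum_shift, binomial_0_r, Cmult_1_l.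
    reflexivity. }
  apply is_jackson_plus; [exact (is_jackson_rpowC_opp q s Hq Hs)|].
  rewrite Csum_rev. apply is_jackson_sum_n. intros r Hr.
  replace (S k - (k - r))%nat with (S r) by lia.
  replace (k - r)%nat with (S k - S r)%nat by lia. rewrite binomial_sym by lia.
  apply is_jackson_scal, is_jackson_LiAux; auto; lia.
Qed.

Theorem theorem1p1 :
  (forall (q : R) (k : nat) (z s : C),
     1 < q -> (0 < k)%nat -> Cmod z < 1 -> Re s < 1 ->
     jackson q (fun a => Phi k z s a) =
     Cplus (Cinv (qnum q (Cminus (RtoC 1) s)))
       (sum_n (fun r : nat =>
          Cmult (RtoC (Binomial.C k r))
            (CSeries (fun l : nat =>
               Cdiv (Cmult (binomC (Copp s) l) (Li (k - r) z (Cplus s (RtoC (INR l)))))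
                    (qnum q (RtoC (INR (l + 1)))))))
          (k - 1)))
  /\
  (forall (q : R) (k : nat) (z s : C),
     1 < q -> (0 < k)%nat -> z <> RtoC 0 ->
     (Cmod z < 1 \/ (Cmod z = 1 /\ INR k < Re s)) ->
     jackson q (fun a => Phi k z s (INR k - a)) =
       Cmult (Cinv (Cpow z k))
         (CSeries (fun l : nat =>
            Cdiv (Cmult (Cmult (Cpow (RtoC (-1)) l) (binomC (Copp s) l))
                        (Li k z (Cplus s (RtoC (INR l)))))
                 (qnum q (RtoC (INR (l + 1))))))
     /\
     jackson q (fun a => Phi k z s (INR k + a)) =
       Cmult (Cinv (Cpow z k))
         (CSeries (fun l : nat =>
            Cdiv (Cmult (binomC (Copp s) l) (Li k z (Cplus s (RtoC (INR l)))))
                 (qnum q (RtoC (INR (l + 1))))))).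
Proof.
  split; [exact jackson_Phi_Lipschitz_Lerch|].
  intros q k z s Hq Hk Hz HR. split.
  - rewrite (jackson_ext q _ (fun a => Phi k z s (INR k + -1 * a))) by (intros n; f_equal; ring).
    rewrite (jackson_Phi_INR_shift q z k s (-1) Hq Hk Hz HR) by (rewrite Rabs_left; lra).
    f_equal. apply CSeries_ext. intros l. rewrite RtoC_pow. f_equal. ring.
  - rewrite (jackson_ext q _ (fun a => Phi k z s (INR k + 1 * a))) by (intros n; f_equal; ring).
    rewrite (jackson_Phi_INR_shift q z k s 1 Hq Hk Hz HR Rabs_R1).
    f_equal. apply CSeries_ext. intros l. now rewrite pow1, Cmult_1_r.
Qed.
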